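(* Setting. Let $u\in C^4(B_R(0))$, $B_R(0)\subset\mathbb{R}^2$, be a convex solution of $\det D^2u=f$ in $B_R(0)$ with $f\in C^2$, $0<m\le f\le M$. Put $r=R/\sqrt2$, $\beta=4$, $c_0=32/m$, $g(t)=e^{c_0t/r^2}$. Let $\tau(x)=(\tau_1(x),\tau_2(x))\in\mathbb{S}^1$ be a continuous unit eigenvector field of $D^2u(x)$ for its largest eigenvalue, let $$\Sigma=\{x\in B_R(0):\ r^2-|x|^2+\langle x,\tau(x)\rangle^2>0,\ r^2-\langle x,\tau(x)\rangle^2>0\},$$ $$\eta(x)=(r^2-|x|^2+\langle x,\tau(x)\rangle^2)(r^2-\langle x,\tau(x)\rangle^2),\qquad \phi(x)=\eta(x)^\beta g(\tfrac12|Du(x)|^2)\,u_{\tau\tau}(x),$$ where $u_{\tau\tau}=\langle D^2u\,\tau,\tau\rangle$. Let $x_0\in\Sigma$ be a point where $\phi$ attains its maximum over $\Sigma$, and choose (after a rotation of coordinates) coordinates in which $D^2u(x_0)$ is diagonal with $\lambda_1=u_{11}(x_0)\ge\lambda_2=u_{22}(x_0)$ and $\tau(x_0)=(1,0)$. Assume $$\eta(x_0)\lambda_1\ge 10^3\Big(1+M+r\sup|\nabla f|+\frac Mm\frac{\sup|Du|}{r}\Big)r^4$$ (so that $\lambda_1>\lambda_2$ and $\tau$, hence $\eta$, is $C^2$ near $x_0$). Write $\eta_i,\eta_{ii}$ for partial derivatives of $\eta$, $u_i,u_{ijk}$, $f_i,f_{ij}$ for partial derivatives of $u,f$, and $\frac{g'}{g}=\frac{g'(\frac12|Du|^2)}{g(\frac12|Du|^2)}=\frac{c_0}{r^2}$.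 Then, with everything evaluated at $x_0$, $$\beta\frac f{\lambda_1}\frac{\eta_1^2}{\eta^2}\le\frac{8\beta fr^6}{\eta^2\lambda_1}+\frac{\lambda_1}4\Big(\frac{u_{112}}{u_{11}}\Big)^2,\qquad \beta f\frac{g'}g\frac{\eta_2}\eta u_2\ge-4\beta f\frac{g'}g\frac{r^4}\eta\frac{|u_2|}r,$$ and $$\begin{aligned}\beta\Big[\frac f{\lambda_1}\frac{\eta_{11}}\eta+\lambda_1\frac{\eta_{22}}\eta\Big]\ge{}&-\frac12\frac{g'}gf\lambda_1-\beta\lambda_1\Big(\frac{\eta_2}\eta\Big)^2-\frac f{2\lambda_1}\Big(\frac{u_{111}}{u_{11}}\Big)^2-\frac{\lambda_1}4\Big(\frac{u_{112}}{u_{11}}\Big)^2\\ &-\frac{2\beta fr^2}{\eta\lambda_1}-\frac{4\beta|f_{12}|r^4}{\eta\lambda_1}-\frac{32\beta f_1^2r^4}{\eta\lambda_1^3}-\frac{8\beta|f_1f_2|r^4}{\eta\lambda_1^3}-\frac{24\beta|f_1|r^3}{\eta\lambda_1}\\ &-\frac{6\beta|f_1|^2r^4}{\eta\lambda_1}-\frac{12\beta fr^2}{\eta\lambda_1}-\frac{8\beta fr^4|f_2|^2}{\eta\lambda_1^3}-\frac{(48\beta)^2fr^6}{\eta^2\lambda_1}-\frac{32\beta^2|f_2|^2r^8}{\eta^2\lambda_1f}.\end{aligned}$$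
   Context: All suprema are over $B_R(0)$. The quantity $\langle x,\tau(x)\rangle^2$ is independent of the sign choice of $\tau$ and invariant under rotations of coordinates, so $\eta$ and $\Sigma$ are well defined; $B_r(0)\subset\Sigma\subset B_R(0)$ and $\eta>0$ in $\Sigma$, $\eta=0$ on $\partial\Sigma$. *)

From Stdlib Require Import Reals Lra.
Open Scope R_scope.

Definition in_ball (Rad x y : R) : Prop := x * x + y * y < Rad * Rad.

Definition cont2_on (D : R -> R -> Prop) (h : R -> R -> R) : Prop :=
  forall x y, D x y -> forall eps, eps > 0 -> exists del, del > 0 /\
    forall x' y', D x' y' -> (x' - x) ^ 2 + (y' - y) ^ 2 < del ^ 2 ->
      Rabs (h x' y' - h x y) < eps.

(* [U] is the family of all partial derivatives of order <= k of [U 0 0] on D,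
   continuous on D: U i j = d^i/dx^i d^j/dy^j (U 0 0).  Hence U 0 0 is C^k on D
   (D open), and conversely every C^k function admits such a family (Schwarz). *)
Definition Ck_family (D : R -> R -> Prop) (k : nat) (U : nat -> nat -> R -> R -> R) : Prop :=
  (forall i j x y, (i + j < k)%nat -> D x y ->
     derivable_pt_lim (fun s => U i j s y) x (U (S i) j x y) /\
     derivable_pt_lim (fun t => U i j x t) y (U i (S j) x y)) /\
  (forall i j, (i + j <= k)%nat -> cont2_on D (U i j)).

Definition convex_on_ball (Rad : R) (u : R -> R -> R) : Prop :=
  forall x1 y1 x2 y2 t, in_ball Rad x1 y1 -> in_ball Rad x2 y2 -> 0 <= t <= 1 ->
    u (t * x1 + (1 - t) * x2) (t * y1 + (1 - t) * y2)
      <= t * u x1 y1 + (1 - t) * u x2 y2.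

Definition top_unit_eigvec (a b c v1 v2 : R) : Prop :=
  v1 ^ 2 + v2 ^ 2 = 1 /\
  exists mu, a * v1 + b * v2 = mu * v1 /\ b * v1 + c * v2 = mu * v2 /\
    forall nu w1 w2, (w1 <> 0 \/ w2 <> 0) ->
      a * w1 + b * w2 = nu * w1 -> b * w1 + c * w2 = nu * w2 -> nu <= mu.

Definition eta_fun (r : R) (t1 t2 : R -> R -> R) (x y : R) : R :=
  (r ^ 2 - (x ^ 2 + y ^ 2) + (x * t1 x y + y * t2 x y) ^ 2) *
  (r ^ 2 - (x * t1 x y + y * t2 x y) ^ 2).

Definition in_Sigma (Rad r : R) (t1 t2 : R -> R -> R) (x y : R) : Prop :=
  in_ball Rad x y /\
  r ^ 2 - (x ^ 2 + y ^ 2) + (x * t1 x y + y * t2 x y) ^ 2 > 0 /\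
  r ^ 2 - (x * t1 x y + y * t2 x y) ^ 2 > 0.

Definition g_fun (c0 r t : R) : R := exp (c0 * t / r ^ 2).

Definition phi_fun (r c0 : R) (U : nat -> nat -> R -> R -> R) (t1 t2 : R -> R -> R)
    (x y : R) : R :=
  eta_fun r t1 t2 x y ^ 4 *
  g_fun c0 r (/ 2 * (U 1%nat 0%nat x y ^ 2 + U 0%nat 1%nat x y ^ 2)) *
  (U 2%nat 0%nat x y * t1 x y ^ 2 + 2 * U 1%nat 1%nat x y * t1 x y * t2 x y
   + U 0%nat 2%nat x y * t2 x y ^ 2).

From Stdlib Require Import Reals Lra Lia.
From Coquelicot Require Import Coquelicot.
Open Scope R_scope.

(* Near [x0] the top eigenvalue of [D^2 u] is simple, so [<x, tau>^2], and with
   it [eta] and [phi], are explicit smooth functions of the point and of the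
   Hessian entries.  Differentiating [phi] along the two coordinate lines at the
   constrained maximum gives the first-order conditions, which at the diagonal
   point express [u_111] and [u_112] through [eta_1], [eta_2] and [Du];
   differentiating [det D^2 u = f] expresses [u_122], [u_222] and [u_1222]
   through [f_1], [f_2], [f_12].  What remains is algebra: the main assumption
   makes [eta lambda_1] huge compared with [r^4 (1 + f)], [r^5 |Df|] and
   [r^3 |Du| M / m], each cross term is absorbed by Young's inequality, and
   [|eta_2| <= 4 r^3] follows from a closed loop of linear bounds with small
   gain. *)

Definition eig_gap (a b c : R) : R := sqrt ((a - c) ^ 2 + 4 * b ^ 2).

Definition top_eig (a b c : R) : R := (a + c + eig_gap a b c) / 2.

(* [<(x,y), v> ^ 2] for a unit eigenvector [v] of the top eigenvalue of
   [[a,b],[b,c]], written in the matrix entries (valid when [eig_gap a b c > 0]). *)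
Definition proj_top_sq (x y a b c : R) : R :=
  (x ^ 2 + y ^ 2) / 2 + ((a - c) * (x ^ 2 - y ^ 2) / 2 + 2 * b * x * y) / eig_gap a b c.

Lemma eig_gap_sq (a b c : R) : eig_gap a b c * eig_gap a b c = (a - c) ^ 2 + 4 * b ^ 2.
Proof. apply sqrt_sqrt; pose proof (pow2_ge_0 (a - c)); pose proof (pow2_ge_0 b); lra. Qed.

Lemma eigval_char_eq (a b c mu v1 v2 : R) : v1 ^ 2 + v2 ^ 2 = 1 ->
  a * v1 + b * v2 = mu * v1 -> b * v1 + c * v2 = mu * v2 -> (a - mu) * (c - mu) = b ^ 2.
Proof.
  intros hn e1 e2.
  assert (h1 : ((a - mu) * (c - mu) - b ^ 2) * v1 = (c - mu) * (a * v1 + b * v2 - mu * v1)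
                                                    - b * (b * v1 + c * v2 - mu * v2)) by ring.
  assert (h2 : ((a - mu) * (c - mu) - b ^ 2) * v2 = (a - mu) * (b * v1 + c * v2 - mu * v2)
                                                    - b * (a * v1 + b * v2 - mu * v1)) by ring.
  rewrite e1, e2, !Rminus_diag, !Rmult_0_r, Rminus_0_r in h1, h2.
  enough (h : (a - mu) * (c - mu) - b ^ 2 = 0) by lra.
  transitivity ((((a - mu) * (c - mu) - b ^ 2) * v1) * v1 + (((a - mu) * (c - mu) - b ^ 2) * v2) * v2).
  - transitivity (((a - mu) * (c - mu) - b ^ 2) * (v1 ^ 2 + v2 ^ 2)); [rewrite hn |]; ring.
  - rewrite h1, h2. ring.
Qed.

Lemma eig_gap_pos (a b c : R) : 0 < eig_gap a b c -> 0 < (a - c) ^ 2 + 4 * b ^ 2.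
Proof.
  unfold eig_gap. intros h. destruct (Rle_or_lt ((a - c) ^ 2 + 4 * b ^ 2) 0) as [hle | hlt]; [| exact hlt].
  rewrite sqrt_neg_0 in h by exact hle. lra.
Qed.

Lemma eig_gap_pos_of_lt (a b c : R) : c < a -> 0 < eig_gap a b c.
Proof. intros h. apply sqrt_lt_R0. pose proof (pow2_ge_0 b). assert (0 < (a - c) ^ 2) by (apply pow_lt; lra). lra. Qed.

Lemma top_eig_le_eigval (a b c mu : R) :
  (forall nu w1 w2, (w1 <> 0 \/ w2 <> 0) ->
     a * w1 + b * w2 = nu * w1 -> b * w1 + c * w2 = nu * w2 -> nu <= mu) ->
  top_eig a b c <= mu.
Proof.
  intros htop. pose proof (eig_gap_sq a b c) as hD. unfold top_eig.
  set (D := eig_gap a b c) in *.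
  destruct (Req_dec ((a + c + D) / 2 - c) 0) as [h0 | h0].
  - assert (hb : b = 0) by (apply Rsqr_0_uniq; unfold Rsqr; nra). subst b.
    apply (htop _ 0 1); [right | |]; lra.
  - apply (htop _ ((a + c + D) / 2 - c) b); [left; exact h0 | |]; nra.
Qed.

Lemma top_unit_eigvec_eig (a b c v1 v2 : R) : top_unit_eigvec a b c v1 v2 ->
  a * v1 + b * v2 = top_eig a b c * v1 /\ b * v1 + c * v2 = top_eig a b c * v2.
Proof.
  intros [hn [mu [e1 [e2 htop]]]].
  enough (hmu : mu = top_eig a b c) by (rewrite <- hmu; split; assumption).
  pose proof (top_eig_le_eigval a b c mu htop) as hle.
  pose proof (eigval_char_eq a b c mu v1 v2 hn e1 e2) as hch.
  pose proof (eig_gap_sq a b c) as hD. pose proof (sqrt_pos ((a - c) ^ 2 + 4 * b ^ 2)).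
  unfold top_eig in *. fold (eig_gap a b c) in *. set (D := eig_gap a b c) in *.
  assert (hroots : (mu - (a + c + D) / 2) * (mu - (a + c - D) / 2) = 0).
  { transitivity ((a - mu) * (c - mu) - b ^ 2 + ((a - c) ^ 2 + 4 * b ^ 2 - D * D) / 4); [field |].
    rewrite hch, hD. field. }
  destruct (Rmult_integral _ _ hroots); lra.
Qed.

Lemma top_unit_eigvec_quad (a b c v1 v2 : R) : top_unit_eigvec a b c v1 v2 ->
  a * v1 ^ 2 + 2 * b * v1 * v2 + c * v2 ^ 2 = top_eig a b c.
Proof.
  intros hv. destruct (top_unit_eigvec_eig a b c v1 v2 hv) as [e1 e2]. destruct hv as [hn _].
  transitivity (v1 * (a * v1 + b * v2) + v2 * (b * v1 + c * v2)); [ring |].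
  rewrite e1, e2. transitivity (top_eig a b c * (v1 ^ 2 + v2 ^ 2)); [ring |].
  rewrite hn. ring.
Qed.

Lemma top_unit_eigvec_proj_sq (a b c v1 v2 x y : R) : top_unit_eigvec a b c v1 v2 ->
  0 < eig_gap a b c -> (x * v1 + y * v2) ^ 2 = proj_top_sq x y a b c.
Proof.
  intros hv hpos. destruct (top_unit_eigvec_eig a b c v1 v2 hv) as [e1 e2]. destruct hv as [hn _].
  set (mu := top_eig a b c) in *. set (D := eig_gap a b c) in *.
  assert (hD : D = 2 * mu - a - c) by (unfold mu, top_eig; fold D; field).
  assert (z1 : (mu - a) * v1 - b * v2 = 0) by lra.
  assert (z2 : (mu - c) * v2 - b * v1 = 0) by lra.
  (* the components of [v] are read off from [D = (mu - a) + (mu - c)] *)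
  assert (h11 : v1 ^ 2 * D = mu - c).
  { assert (h : v1 ^ 2 * D - (mu - c) * (v1 ^ 2 + v2 ^ 2)
                = v1 * ((mu - a) * v1 - b * v2) - v2 * ((mu - c) * v2 - b * v1)) by (rewrite hD; ring).
    rewrite z1, z2, hn in h. lra. }
  assert (h22 : v2 ^ 2 * D = mu - a).
  { assert (h : v2 ^ 2 * D - (mu - a) * (v1 ^ 2 + v2 ^ 2)
                = v2 * ((mu - c) * v2 - b * v1) - v1 * ((mu - a) * v1 - b * v2)) by (rewrite hD; ring).
    rewrite z1, z2, hn in h. lra. }
  assert (h12 : v1 * v2 * D = b).
  { assert (h : v1 * v2 * D - b * (v1 ^ 2 + v2 ^ 2)
                = v2 * ((mu - a) * v1 - b * v2) + v1 * ((mu - c) * v2 - b * v1)) by (rewrite hD; ring).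
    rewrite z1, z2, hn in h. lra. }
  apply (Rmult_eq_reg_r D); [| lra].
  transitivity (x ^ 2 * (v1 ^ 2 * D) + 2 * x * y * (v1 * v2 * D) + y ^ 2 * (v2 ^ 2 * D)); [ring |].
  rewrite h11, h22, h12. unfold proj_top_sq. fold D. rewrite hD. field. lra.
Qed.

Lemma eig_gap_diag (a c : R) : c < a -> eig_gap a 0 c = a - c.
Proof.
  intros h. unfold eig_gap. replace ((a - c) ^ 2 + 4 * 0 ^ 2) with ((a - c) * (a - c)) by ring.
  apply sqrt_square. lra.
Qed.

Lemma proj_top_sq_diag (x y a c : R) : c < a -> proj_top_sq x y a 0 c = x ^ 2.
Proof. intros h. unfold proj_top_sq. rewrite eig_gap_diag by exact h. field. lra. Qed.

Ltac derive_side :=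
  repeat split;
  try solve [ eexists; eassumption | assumption | nra | apply Rgt_not_eq; lra
            | apply Rgt_not_eq; repeat apply Rmult_lt_0_compat; lra ].

Ltac subst_Derive :=
  repeat match goal with
  | |- context [Derive ?g ?s] =>
      match goal with H : is_derive _ s ?l |- _ =>
        replace (Derive g s) with l by (symmetry; apply is_derive_unique; exact H)
      end
  end.

Definition eta_expr (r x y a b c : R) : R :=
  (r ^ 2 - (x ^ 2 + y ^ 2) + proj_top_sq x y a b c) * (r ^ 2 - proj_top_sq x y a b c).

Lemma eta_expr_diag (r x y a c : R) : c < a -> eta_expr r x y a 0 c = (r ^ 2 - y ^ 2) * (r ^ 2 - x ^ 2).
Proof. intros h. unfold eta_expr. rewrite proj_top_sq_diag by exact h. ring. Qed.

Definition proj_top_sq_deriv (x y a b c x' y' a' b' c' : R) : R :=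
  let D := eig_gap a b c in
  x * x' + y * y'
  + ((a' - c') * (x ^ 2 - y ^ 2) / 2 + (a - c) * (x * x' - y * y') + 2 * b' * x * y
     + 2 * b * (x' * y + x * y')) / D
  - ((a - c) * (x ^ 2 - y ^ 2) / 2 + 2 * b * x * y) * (2 * (a - c) * (a' - c') + 8 * b * b') / (2 * D ^ 3).

Definition eta_expr_deriv (r x y a b c x' y' a' b' c' : R) : R :=
  let q := proj_top_sq x y a b c in
  let q' := proj_top_sq_deriv x y a b c x' y' a' b' c' in
  (-2 * (x * x' + y * y') + q') * (r ^ 2 - q) - (r ^ 2 - (x ^ 2 + y ^ 2) + q) * q'.

Section AlongPath.
Variables (X Y A B C : R -> R) (s X' Y' A' B' C' : R).
Hypotheses (hX : is_derive X s X') (hY : is_derive Y s Y') (hA : is_derive A s A')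
  (hB : is_derive B s B') (hC : is_derive C s C') (hgap : 0 < eig_gap (A s) (B s) (C s)).

Lemma is_derive_proj_top_sq :
  is_derive (fun t => proj_top_sq (X t) (Y t) (A t) (B t) (C t)) s
    (proj_top_sq_deriv (X s) (Y s) (A s) (B s) (C s) X' Y' A' B' C').
Proof.
  pose proof (eig_gap_pos _ _ _ hgap) as hpos.
  unfold proj_top_sq, proj_top_sq_deriv, eig_gap in *. cbv zeta.
  assert (hS : 0 < sqrt ((A s + - C s) * ((A s + - C s) * 1) + 4 * (B s * (B s * 1)))).
  { replace ((A s + - C s) * ((A s + - C s) * 1) + 4 * (B s * (B s * 1)))
      with ((A s - C s) ^ 2 + 4 * B s ^ 2) by ring. exact hgap. }
  auto_derive; [derive_side |].
  subst_Derive.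
  set (S := (A s - C s) ^ 2 + 4 * B s ^ 2) in *.
  replace ((A s + - C s) * ((A s + - C s) * 1) + 4 * (B s * (B s * 1))) with S in * by (unfold S; ring).
  assert (hD : sqrt S * sqrt S = S) by (apply sqrt_sqrt; unfold S; pose proof (pow2_ge_0 (A s - C s)); pose proof (pow2_ge_0 (B s)); lra).
  set (D := sqrt S) in *.
  field. lra.
Qed.

Lemma is_derive_eta_expr (r : R) :
  is_derive (fun t => eta_expr r (X t) (Y t) (A t) (B t) (C t)) s
    (eta_expr_deriv r (X s) (Y s) (A s) (B s) (C s) X' Y' A' B' C').
Proof.
  pose proof is_derive_proj_top_sq as hQ.
  set (Q := fun t => proj_top_sq (X t) (Y t) (A t) (B t) (C t)) in hQ.
  unfold eta_expr_deriv. cbv zeta. fold (Q s).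
  apply (is_derive_ext (fun t => (r ^ 2 - (X t ^ 2 + Y t ^ 2) + Q t) * (r ^ 2 - Q t))); [reflexivity |].
  auto_derive; [derive_side |]. subst_Derive. ring.
Qed.

End AlongPath.

Lemma eta_expr_deriv_diag (r x y a c x' y' a' b' c' : R) : c < a ->
  eta_expr_deriv r x y a 0 c x' y' a' b' c' =
  (-2 * (x * x' + y * y') + (2 * x * x' + 2 * b' * x * y / (a - c))) * (r ^ 2 - x ^ 2)
  - (r ^ 2 - y ^ 2) * (2 * x * x' + 2 * b' * x * y / (a - c)).
Proof.
  intros h. unfold eta_expr_deriv, proj_top_sq_deriv. cbv zeta.
  rewrite proj_top_sq_diag, eig_gap_diag by exact h. field. lra.
Qed.

Lemma eta_expr_deriv_x_diag (r x y a c a' b' c' : R) : c < a ->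
  eta_expr_deriv r x y a 0 c 1 0 a' b' c'
  = -2 * x * (r ^ 2 - y ^ 2) + 2 * b' * (x * y * (y ^ 2 - x ^ 2)) / (a - c).
Proof. intros h. rewrite eta_expr_deriv_diag by exact h. field. lra. Qed.

Lemma eta_expr_deriv_y_diag (r x y a c a' b' c' : R) : c < a ->
  eta_expr_deriv r x y a 0 c 0 1 a' b' c'
  = -2 * y * (r ^ 2 - x ^ 2) + 2 * b' * (x * y * (y ^ 2 - x ^ 2)) / (a - c).
Proof. intros h. rewrite eta_expr_deriv_diag by exact h. field. lra. Qed.

(* Second partial derivatives of [eta_expr] in [x] and in [y] at a point where
   [b = 0], in terms of [w = a - c], its derivative [w'], and the first and
   second derivatives [bp], [bpp] of [b] in the same direction. *)
Definition eta_xx_diag (r x y w w' bp bpp : R) : R :=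
  let q1 := 2 * x + 2 * x * y * bp / w in
  let q11 := 2 + 2 * bpp * x * y / w + 4 * bp * y / w - 4 * bp * w' * x * y / w ^ 2
             - 2 * bp ^ 2 * (x ^ 2 - y ^ 2) / w ^ 2 in
  -2 * (r ^ 2 - x ^ 2) + q11 * (y ^ 2 - x ^ 2) + 4 * x * q1 - 2 * q1 ^ 2.

Definition eta_yy_diag (r x y w w' bp bpp : R) : R :=
  let q2 := 2 * x * y * bp / w in
  let q22 := 2 * bpp * x * y / w + 4 * bp * x / w - 4 * bp * w' * x * y / w ^ 2
             - 2 * bp ^ 2 * (x ^ 2 - y ^ 2) / w ^ 2 in
  -2 * (r ^ 2 - x ^ 2) + q22 * (y ^ 2 - x ^ 2) + 4 * y * q2 - 2 * q2 ^ 2.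

Section SecondDerivatives.
Variables (a b c a1 b1 c1 : R -> R) (s a2 b2 c2 : R).
Hypotheses (ha : is_derive a s (a1 s)) (hb : is_derive b s (b1 s)) (hc : is_derive c s (c1 s))
  (ha1 : is_derive a1 s a2) (hb1 : is_derive b1 s b2) (hc1 : is_derive c1 s c2)
  (hb0 : b s = 0) (hgap : c s < a s).

Ltac finish_diag :=
  subst_Derive; rewrite hb0;
  replace (sqrt ((a s + - c s) * ((a s + - c s) * 1) + 4 * (0 * (0 * 1)))) with (a s - c s)
    by (symmetry; apply (eig_gap_diag (a s) (c s) hgap));
  replace (sqrt ((a s - c s) ^ 2 + 4 * 0 ^ 2)) with (a s - c s)
    by (symmetry; apply (eig_gap_diag (a s) (c s) hgap));
  field; lra.

Lemma is_derive_eta_x_diag (r y : R) :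
  is_derive (fun t => eta_expr_deriv r t y (a t) (b t) (c t) 1 0 (a1 t) (b1 t) (c1 t)) s
    (eta_xx_diag r s y (a s - c s) (a1 s - c1 s) (b1 s) b2).
Proof.
  unfold eta_expr_deriv, proj_top_sq_deriv, proj_top_sq, eig_gap, eta_xx_diag. cbv zeta.
  assert (0 < sqrt ((a s + - c s) * ((a s + - c s) * 1) + 4 * (b s * (b s * 1))))
    by (apply sqrt_lt_R0; nra).
  auto_derive; [derive_side |].
  finish_diag.
Qed.

Lemma is_derive_eta_y_diag (r x : R) :
  is_derive (fun t => eta_expr_deriv r x t (a t) (b t) (c t) 0 1 (a1 t) (b1 t) (c1 t)) s
    (eta_yy_diag r x s (a s - c s) (a1 s - c1 s) (b1 s) b2).
Proof.
  unfold eta_expr_deriv, proj_top_sq_deriv, proj_top_sq, eig_gap, eta_yy_diag. cbv zeta.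
  assert (0 < sqrt ((a s + - c s) * ((a s + - c s) * 1) + 4 * (b s * (b s * 1))))
    by (apply sqrt_lt_R0; nra).
  auto_derive; [derive_side |].
  finish_diag.
Qed.

End SecondDerivatives.

(* At a point where [b = 0] the top eigenvalue moves like the diagonal entry [a]. *)
Lemma is_derive_phi_diag (K : R) (h p q a b c : R -> R) (s h' p' q' a' b' c' : R) :
  is_derive h s h' -> is_derive p s p' -> is_derive q s q' -> is_derive a s a' ->
  is_derive b s b' -> is_derive c s c' -> b s = 0 -> c s < a s ->
  is_derive (fun t => h t ^ 4 * exp (K * (/ 2 * (p t ^ 2 + q t ^ 2))) * top_eig (a t) (b t) (c t)) s
    (h s ^ 3 * exp (K * (/ 2 * (p s ^ 2 + q s ^ 2))) *
       (4 * h' * a s + h s * K * (p s * p' + q s * q') * a s + h s * a')).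
Proof.
  intros hh hp hq ha hb hc hb0 hgap. unfold top_eig, eig_gap.
  assert (0 < sqrt ((a s + - c s) * ((a s + - c s) * 1) + 4 * (b s * (b s * 1))))
    by (apply sqrt_lt_R0; nra).
  auto_derive; [derive_side |].
  subst_Derive. rewrite hb0.
  replace (sqrt ((a s + - c s) * ((a s + - c s) * 1) + 4 * (0 * (0 * 1)))) with (a s - c s)
    by (symmetry; apply (eig_gap_diag (a s) (c s) hgap)).
  replace (p s * (p s * 1) + q s * (q s * 1)) with (p s ^ 2 + q s ^ 2) by ring.
  field. lra.
Qed.

Lemma is_derive_local_max (f : R -> R) (x l : R) :
  is_derive f x l -> locally x (fun s => f s <= f x) -> l = 0.
Proof.
  intros hd [eps heps]. apply is_derive_Reals in hd. pose proof (cond_pos eps).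
  change l with (derive_pt f x (exist _ l hd)).
  apply (deriv_maximum f (x - eps) (x + eps)); [lra | lra |].
  intros s h1 h2. apply heps. change (Rabs (s - x) < eps). apply Rabs_def1; lra.
Qed.

Lemma locally_pos (g : R -> R) (x : R) : ex_derive g x -> 0 < g x -> locally x (fun s => 0 < g s).
Proof. intros hd hp. apply (ex_derive_continuous g x hd (fun u => 0 < u)). exact (open_gt 0 (g x) hp). Qed.

Lemma is_derive_constrained_local_max (f g1 g2 : R -> R) (x l : R) :
  is_derive f x l -> ex_derive g1 x -> ex_derive g2 x -> 0 < g1 x -> 0 < g2 x ->
  locally x (fun s => 0 < g1 s -> 0 < g2 s -> f s <= f x) -> l = 0.
Proof.
  intros hd hd1 hd2 hp1 hp2 hmax. apply (is_derive_local_max f x l hd).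
  generalize (filter_and _ _ hmax (filter_and _ _ (locally_pos g1 x hd1 hp1) (locally_pos g2 x hd2 hp2))).
  apply filter_imp. intros s [h [h1 h2]]. exact (h h1 h2).
Qed.

Lemma is_derive_loc_unique (f g : R -> R) (x l1 l2 : R) :
  locally x (fun s => f s = g s) -> is_derive f x l1 -> is_derive g x l2 -> l1 = l2.
Proof.
  intros he h1 h2. rewrite <- (is_derive_unique g x l2 h2).
  symmetry. apply is_derive_unique. exact (is_derive_ext_loc f g x l1 he h1).
Qed.

Lemma center_in_disc (x0 y0 d : R) : 0 < d -> (x0 - x0) ^ 2 + (y0 - y0) ^ 2 < d ^ 2.
Proof. intros hd. replace ((x0 - x0) ^ 2 + (y0 - y0) ^ 2) with 0 by ring. apply pow_lt. exact hd. Qed.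

Lemma locally_disc_x (x0 y0 d x y : R) : 0 < d -> (x - x0) ^ 2 + (y - y0) ^ 2 < (d / 2) ^ 2 ->
  locally x (fun s => (s - x0) ^ 2 + (y - y0) ^ 2 < d ^ 2).
Proof.
  intros hd h. exists (mkposreal (d / 4) ltac:(lra)). intros s hs.
  change (Rabs (s - x) < d / 4) in hs. apply Rabs_def2 in hs.
  assert (hsq : (s - x) ^ 2 < (d / 4) ^ 2) by nra.
  pose proof (pow2_ge_0 (y - y0)). pose proof (pow2_ge_0 ((s - x) - (x - x0))).
  nra.
Qed.

Lemma locally_disc_y (x0 y0 d x y : R) : 0 < d -> (x - x0) ^ 2 + (y - y0) ^ 2 < (d / 2) ^ 2 ->
  locally y (fun s => (x - x0) ^ 2 + (s - y0) ^ 2 < d ^ 2).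
Proof.
  intros hd h. rewrite Rplus_comm in h.
  apply (filter_imp _ _ (fun s hs => eq_ind _ (fun z => z < d ^ 2) hs _ (Rplus_comm _ _))).
  exact (locally_disc_x y0 x0 d y x hd h).
Qed.

Lemma in_ball_near (Rad x0 y0 : R) : 0 < Rad -> in_ball Rad x0 y0 ->
  exists d, 0 < d /\ forall x y, (x - x0) ^ 2 + (y - y0) ^ 2 < d ^ 2 -> in_ball Rad x y.
Proof.
  unfold in_ball. intros hR h.
  set (e := Rad * Rad - (x0 * x0 + y0 * y0)).
  assert (he : 0 < e) by (unfold e; lra).
  set (d := Rmin Rad (e / (4 * Rad))).
  assert (hd1 : d <= Rad) by apply Rmin_l.
  assert (hd0 : 0 < d) by (apply Rmin_pos; [lra | apply Rdiv_lt_0_compat; lra]).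
  assert (hd3 : 4 * Rad * d <= e).
  { assert (hd2 : d <= e / (4 * Rad)) by apply Rmin_r.
    apply (Rmult_le_compat_l (4 * Rad)) in hd2; [| lra].
    replace (4 * Rad * (e / (4 * Rad))) with e in hd2 by (field; lra). lra. }
  exists d. split; [exact hd0 |]. intros x y hxy.
  set (dx := x - x0) in *. set (dy := y - y0) in *.
  (* Cauchy-Schwarz bounds the cross term by [Rad * d] *)
  assert (hcs : (x0 * dx + y0 * dy) ^ 2 < (Rad * d) ^ 2).
  { assert ((x0 * dx + y0 * dy) ^ 2 <= (x0 * x0 + y0 * y0) * (dx ^ 2 + dy ^ 2))
      by (pose proof (pow2_ge_0 (x0 * dy - y0 * dx)); nra).
    assert ((x0 * x0 + y0 * y0) * (dx ^ 2 + dy ^ 2) <= (Rad * Rad) * (dx ^ 2 + dy ^ 2)) by nra.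
    assert ((Rad * Rad) * (dx ^ 2 + dy ^ 2) < (Rad * Rad) * d ^ 2) by (apply Rmult_lt_compat_l; nra).
    replace ((Rad * d) ^ 2) with ((Rad * Rad) * d ^ 2) by ring. lra. }
  assert (hcross : x0 * dx + y0 * dy < Rad * d).
  { destruct (Rlt_or_le (x0 * dx + y0 * dy) (Rad * d)) as [hl | hl]; [exact hl |].
    assert (0 < Rad * d) by (apply Rmult_lt_0_compat; lra). nra. }
  replace x with (x0 + dx) by (unfold dx; ring). replace y with (y0 + dy) by (unfold dy; ring).
  unfold e in hd3. nra.
Qed.

Lemma cont2_on_lt_near (D : R -> R -> Prop) (g h : R -> R -> R) (x0 y0 : R) :
  D x0 y0 -> cont2_on D g -> cont2_on D h -> g x0 y0 < h x0 y0 ->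
  exists d, 0 < d /\ forall x y, D x y -> (x - x0) ^ 2 + (y - y0) ^ 2 < d ^ 2 -> g x y < h x y.
Proof.
  intros h0 hg hh hlt. set (eps := (h x0 y0 - g x0 y0) / 2).
  destruct (hg x0 y0 h0 eps ltac:(unfold eps; lra)) as [dg [dgp hdg]].
  destruct (hh x0 y0 h0 eps ltac:(unfold eps; lra)) as [dh [dhp hdh]].
  exists (Rmin dg dh). split; [apply Rmin_pos; lra |]. intros x y hD hxy.
  assert (hle : forall z, Rmin dg dh <= z -> (Rmin dg dh) ^ 2 <= z ^ 2).
  { intros z hz. apply pow_incr. split; [left; apply Rmin_pos; lra | exact hz]. }
  pose proof (hle dg (Rmin_l _ _)). pose proof (hle dh (Rmin_r _ _)).
  specialize (hdg x y hD ltac:(lra)). specialize (hdh x y hD ltac:(lra)).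
  apply Rabs_def2 in hdg. apply Rabs_def2 in hdh. unfold eps in *. lra.
Qed.

Lemma is_derive_det2 (a b c : R -> R) (s a' b' c' : R) :
  is_derive a s a' -> is_derive b s b' -> is_derive c s c' ->
  is_derive (fun t => a t * c t - b t ^ 2) s (a' * c s + a s * c' - 2 * b s * b').
Proof. intros ha hb hc. auto_derive; [derive_side |]. subst_Derive. ring. Qed.

Lemma is_derive_bilin3 (p q u v w z : R -> R) (s p' q' u' v' w' z' : R) :
  is_derive p s p' -> is_derive q s q' -> is_derive u s u' -> is_derive v s v' ->
  is_derive w s w' -> is_derive z s z' ->
  is_derive (fun t => p t * q t + u t * v t - 2 * w t * z t) s
    (p' * q s + p s * q' + u' * v s + u s * v' - 2 * (w' * z s + w s * z')).
Proof. intros hp hq hu hv hw hz. auto_derive; [derive_side |]. subst_Derive. ring. Qed.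

Definition eta_x (r : R) (U : nat -> nat -> R -> R -> R) (x y : R) : R :=
  eta_expr_deriv r x y (U 2%nat 0%nat x y) (U 1%nat 1%nat x y) (U 0%nat 2%nat x y)
    1 0 (U 3%nat 0%nat x y) (U 2%nat 1%nat x y) (U 1%nat 2%nat x y).

Definition eta_y (r : R) (U : nat -> nat -> R -> R -> R) (x y : R) : R :=
  eta_expr_deriv r x y (U 2%nat 0%nat x y) (U 1%nat 1%nat x y) (U 0%nat 2%nat x y)
    0 1 (U 2%nat 1%nat x y) (U 1%nat 2%nat x y) (U 0%nat 3%nat x y).

Definition eta_x_x (r : R) (U : nat -> nat -> R -> R -> R) (x y : R) : R :=
  eta_xx_diag r x y (U 2%nat 0%nat x y - U 0%nat 2%nat x y) (U 3%nat 0%nat x y - U 1%nat 2%nat x y)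
    (U 2%nat 1%nat x y) (U 3%nat 1%nat x y).

Definition eta_y_y (r : R) (U : nat -> nat -> R -> R -> R) (x y : R) : R :=
  eta_yy_diag r x y (U 2%nat 0%nat x y - U 0%nat 2%nat x y) (U 2%nat 1%nat x y - U 0%nat 3%nat x y)
    (U 1%nat 2%nat x y) (U 1%nat 3%nat x y).

Lemma in_Sigma_diag (Rad r x0 y0 : R) (t1 t2 : R -> R -> R) :
  in_Sigma Rad r t1 t2 x0 y0 -> t1 x0 y0 = 1 -> t2 x0 y0 = 0 ->
  in_ball Rad x0 y0 /\ 0 < r ^ 2 - y0 ^ 2 /\ 0 < r ^ 2 - x0 ^ 2 /\
  eta_fun r t1 t2 x0 y0 = (r ^ 2 - y0 ^ 2) * (r ^ 2 - x0 ^ 2).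
Proof.
  intros [hb [hA hB]] h1 h2. unfold eta_fun. rewrite h1, h2 in *.
  repeat split; [exact hb | nra | nra | ring].
Qed.

Lemma Hessian_gap_near (Rad x0 y0 : R) (U : nat -> nat -> R -> R -> R) :
  0 < Rad -> in_ball Rad x0 y0 -> Ck_family (in_ball Rad) 4 U -> U 0%nat 2%nat x0 y0 < U 2%nat 0%nat x0 y0 ->
  exists del, 0 < del /\ forall x y, (x - x0) ^ 2 + (y - y0) ^ 2 < del ^ 2 ->
    in_ball Rad x y /\ U 0%nat 2%nat x y < U 2%nat 0%nat x y.
Proof.
  intros hR hb hU hgap.
  destruct (in_ball_near Rad x0 y0 hR hb) as [d1 [hd1 hball]].
  destruct (cont2_on_lt_near _ _ _ x0 y0 hb (proj2 hU 0%nat 2%nat ltac:(lia)) (proj2 hU 2%nat 0%nat ltac:(lia)) hgap)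
    as [d2 [hd2 hlt]].
  exists (Rmin d1 d2). split; [apply Rmin_pos; lra |]. intros x y hxy.
  assert (hsq : forall d, Rmin d1 d2 <= d -> Rmin d1 d2 ^ 2 <= d ^ 2)
    by (intros d hd; apply pow_incr; split; [left; apply Rmin_pos |]; lra).
  pose proof (hsq d1 (Rmin_l _ _)). pose proof (hsq d2 (Rmin_r _ _)).
  assert (hb' : in_ball Rad x y) by (apply hball; lra).
  split; [exact hb' | apply hlt; [exact hb' | lra]].
Qed.

Section AtMaximum.

Variables (Rad r c0 del x0 y0 : R) (U F : nat -> nat -> R -> R -> R) (t1 t2 : R -> R -> R).

Local Notation near d x y := ((x - x0) ^ 2 + (y - y0) ^ 2 < d ^ 2).

Hypotheses (hU : Ck_family (in_ball Rad) 4 U) (hF : Ck_family (in_ball Rad) 2 F)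
  (hdet : forall x y, in_ball Rad x y ->
     U 2%nat 0%nat x y * U 0%nat 2%nat x y - U 1%nat 1%nat x y ^ 2 = F 0%nat 0%nat x y)
  (hev : forall x y, in_ball Rad x y ->
     top_unit_eigvec (U 2%nat 0%nat x y) (U 1%nat 1%nat x y) (U 0%nat 2%nat x y) (t1 x y) (t2 x y))
  (hmax : forall x y, in_Sigma Rad r t1 t2 x y -> phi_fun r c0 U t1 t2 x y <= phi_fun r c0 U t1 t2 x0 y0)
  (hdel : 0 < del)
  (hnear : forall x y, near del x y -> in_ball Rad x y /\ U 0%nat 2%nat x y < U 2%nat 0%nat x y)
  (hb0 : U 1%nat 1%nat x0 y0 = 0) (hA0 : 0 < r ^ 2 - y0 ^ 2) (hB0 : 0 < r ^ 2 - x0 ^ 2).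

Lemma dU_x i j x y : (i + j < 4)%nat -> in_ball Rad x y ->
  is_derive (fun s => U i j s y) x (U (S i) j x y).
Proof. intros hij hb. apply is_derive_Reals. exact (proj1 (proj1 hU i j x y hij hb)). Qed.

Lemma dU_y i j x y : (i + j < 4)%nat -> in_ball Rad x y ->
  is_derive (fun t => U i j x t) y (U i (S j) x y).
Proof. intros hij hb. apply is_derive_Reals. exact (proj2 (proj1 hU i j x y hij hb)). Qed.

Lemma dF_x i j x y : (i + j < 2)%nat -> in_ball Rad x y ->
  is_derive (fun s => F i j s y) x (F (S i) j x y).
Proof. intros hij hb. apply is_derive_Reals. exact (proj1 (proj1 hF i j x y hij hb)). Qed.

Lemma dF_y i j x y : (i + j < 2)%nat -> in_ball Rad x y ->
  is_derive (fun t => F i j x t) y (F i (S j) x y).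
Proof. intros hij hb. apply is_derive_Reals. exact (proj2 (proj1 hF i j x y hij hb)). Qed.

Let phi_at (x y : R) : R :=
  eta_expr r x y (U 2%nat 0%nat x y) (U 1%nat 1%nat x y) (U 0%nat 2%nat x y) ^ 4 *
  exp (c0 / r ^ 2 * (/ 2 * (U 1%nat 0%nat x y ^ 2 + U 0%nat 1%nat x y ^ 2))) *
  top_eig (U 2%nat 0%nat x y) (U 1%nat 1%nat x y) (U 0%nat 2%nat x y).

Lemma eta_fun_near x y : near del x y ->
  eta_fun r t1 t2 x y = eta_expr r x y (U 2%nat 0%nat x y) (U 1%nat 1%nat x y) (U 0%nat 2%nat x y).
Proof.
  intros h. destruct (hnear x y h) as [hb hgap]. unfold eta_fun, eta_expr.
  rewrite (top_unit_eigvec_proj_sq _ _ _ _ _ x y (hev x y hb) (eig_gap_pos_of_lt _ _ _ hgap)).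
  reflexivity.
Qed.

Lemma phi_fun_near x y : near del x y -> phi_fun r c0 U t1 t2 x y = phi_at x y.
Proof.
  intros h. destruct (hnear x y h) as [hb _]. unfold phi_fun, phi_at, g_fun.
  rewrite (eta_fun_near x y h), (top_unit_eigvec_quad _ _ _ _ _ (hev x y hb)).
  do 3 f_equal. unfold Rdiv. ring.
Qed.

Lemma center_near : near del x0 y0.
Proof. exact (center_in_disc x0 y0 del hdel). Qed.

Lemma phi_at_le_max x y : near del x y ->
  0 < r ^ 2 - (x ^ 2 + y ^ 2) + proj_top_sq x y (U 2%nat 0%nat x y) (U 1%nat 1%nat x y) (U 0%nat 2%nat x y) ->
  0 < r ^ 2 - proj_top_sq x y (U 2%nat 0%nat x y) (U 1%nat 1%nat x y) (U 0%nat 2%nat x y) ->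
  phi_at x y <= phi_at x0 y0.
Proof.
  intros h hp1 hp2. destruct (hnear x y h) as [hb hgap].
  rewrite <- (phi_fun_near x y h), <- (phi_fun_near x0 y0 center_near). apply hmax.
  rewrite <- (top_unit_eigvec_proj_sq _ _ _ _ _ x y (hev x y hb) (eig_gap_pos_of_lt _ _ _ hgap)) in hp1, hp2.
  split; [exact hb | split; apply Rlt_gt; assumption].
Qed.

Lemma is_derive_eta_fun_x x y : near (del / 2) x y ->
  is_derive (fun s => eta_fun r t1 t2 s y) x (eta_x r U x y).
Proof.
  intros h. pose proof (locally_disc_x x0 y0 del x y hdel h) as hloc.
  destruct (hnear x y (locally_singleton _ _ hloc)) as [hb hgap].
  apply (is_derive_ext_loc (fun s => eta_expr r s y (U 2%nat 0%nat s y) (U 1%nat 1%nat s y) (U 0%nat 2%nat s y))).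
  - apply (filter_imp _ _ (fun s hs => eq_sym (eta_fun_near s y hs)) hloc).
  - apply (is_derive_eta_expr (fun s => s) (fun _ => y) (fun s => U 2%nat 0%nat s y)
             (fun s => U 1%nat 1%nat s y) (fun s => U 0%nat 2%nat s y)); try (apply dU_x; [lia | exact hb]).
    + auto_derive; auto.
    + auto_derive; auto.
    + exact (eig_gap_pos_of_lt _ _ _ hgap).
Qed.

Lemma is_derive_eta_fun_y x y : near (del / 2) x y ->
  is_derive (fun t => eta_fun r t1 t2 x t) y (eta_y r U x y).
Proof.
  intros h. pose proof (locally_disc_y x0 y0 del x y hdel h) as hloc.
  destruct (hnear x y (locally_singleton _ _ hloc)) as [hb hgap].
  apply (is_derive_ext_loc (fun t => eta_expr r x t (U 2%nat 0%nat x t) (U 1%nat 1%nat x t) (U 0%nat 2%nat x t))).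
  - apply (filter_imp _ _ (fun s hs => eq_sym (eta_fun_near x s hs)) hloc).
  - apply (is_derive_eta_expr (fun _ => x) (fun t => t) (fun t => U 2%nat 0%nat x t)
             (fun t => U 1%nat 1%nat x t) (fun t => U 0%nat 2%nat x t)); try (apply dU_y; [lia | exact hb]).
    + auto_derive; auto.
    + auto_derive; auto.
    + exact (eig_gap_pos_of_lt _ _ _ hgap).
Qed.

(* The first-order condition for the maximum of [phi] along a path through
   [(x0, y0)] on which the Hessian entries are differentiable. *)
Lemma critical_along (px py : R -> R) (s0 px' py' : R) (du : nat -> nat -> R) :
  is_derive px s0 px' -> is_derive py s0 py' -> px s0 = x0 -> py s0 = y0 ->
  (forall i j, (i + j <= 2)%nat -> is_derive (fun s => U i j (px s) (py s)) s0 (du i j)) ->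
  locally s0 (fun s => near del (px s) (py s)) ->
  4 * eta_expr_deriv r x0 y0 (U 2%nat 0%nat x0 y0) 0 (U 0%nat 2%nat x0 y0) px' py'
        (du 2%nat 0%nat) (du 1%nat 1%nat) (du 0%nat 2%nat) * U 2%nat 0%nat x0 y0
  + (r ^ 2 - y0 ^ 2) * (r ^ 2 - x0 ^ 2) * (c0 / r ^ 2)
      * (U 1%nat 0%nat x0 y0 * du 1%nat 0%nat + U 0%nat 1%nat x0 y0 * du 0%nat 1%nat) * U 2%nat 0%nat x0 y0
  + (r ^ 2 - y0 ^ 2) * (r ^ 2 - x0 ^ 2) * du 2%nat 0%nat = 0.
Proof.
  intros hpx hpy ex ey hdu hloc.
  set (uu i j := fun s => U i j (px s) (py s)).
  assert (hd : forall i j, (i + j <= 2)%nat -> is_derive (uu i j) s0 (du i j)) by exact hdu.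
  assert (hgap : uu 0%nat 2%nat s0 < uu 2%nat 0%nat s0)
    by (unfold uu; rewrite ex, ey; exact (proj2 (hnear x0 y0 center_near))).
  assert (hb : uu 1%nat 1%nat s0 = 0) by (unfold uu; rewrite ex, ey; exact hb0).
  assert (heta0 : eta_expr r (px s0) (py s0) (uu 2%nat 0%nat s0) (uu 1%nat 1%nat s0) (uu 0%nat 2%nat s0)
                  = (r ^ 2 - y0 ^ 2) * (r ^ 2 - x0 ^ 2))
    by (rewrite hb, ex, ey; exact (eta_expr_diag r x0 y0 _ _ hgap)).
  pose proof (hd 2%nat 0%nat ltac:(lia)) as hA. pose proof (hd 1%nat 1%nat ltac:(lia)) as hB.
  pose proof (hd 0%nat 2%nat ltac:(lia)) as hC. pose proof (hd 1%nat 0%nat ltac:(lia)) as hP.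
  pose proof (hd 0%nat 1%nat ltac:(lia)) as hQ.
  pose proof (eig_gap_pos_of_lt _ (uu 1%nat 1%nat s0) _ hgap) as hgap'.
  pose proof (is_derive_eta_expr _ _ _ _ _ _ _ _ _ _ _ hpx hpy hA hB hC hgap' r) as heta.
  pose proof (is_derive_phi_diag (c0 / r ^ 2) _ _ _ _ _ _ _ _ _ _ _ _ _ heta hP hQ hA hB hC hb hgap) as hphi.
  pose proof (is_derive_proj_top_sq _ _ _ _ _ _ _ _ _ _ _ hpx hpy hA hB hC hgap') as hq.
  set (q := fun s => proj_top_sq (px s) (py s) (uu 2%nat 0%nat s) (uu 1%nat 1%nat s) (uu 0%nat 2%nat s)) in hq.
  assert (hq0 : q s0 = x0 ^ 2) by (unfold q; rewrite hb, ex; exact (proj_top_sq_diag _ _ _ _ hgap)).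
  match type of hphi with is_derive _ _ ?l => assert (hzero : l = 0) end.
  { apply (is_derive_constrained_local_max _ (fun s => r ^ 2 - (px s ^ 2 + py s ^ 2) + q s)
      (fun s => r ^ 2 - q s) s0 _ hphi).
    - auto_derive; derive_side.
    - auto_derive; derive_side.
    - rewrite hq0, ex, ey. lra.
    - rewrite hq0. lra.
    - apply (filter_imp (fun s => near del (px s) (py s))); [| exact hloc]. intros s hs h1 h2.
      change (phi_at (px s) (py s) <= phi_at (px s0) (py s0)). rewrite ex, ey.
      exact (phi_at_le_max _ _ hs h1 h2). }
  cbv beta in hzero. rewrite heta0, hb in hzero.
  assert (0 < ((r ^ 2 - y0 ^ 2) * (r ^ 2 - x0 ^ 2)) ^ 3) by (apply pow_lt, Rmult_lt_0_compat; assumption).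
  pose proof (exp_pos (c0 / r ^ 2 * (/ 2 * (uu 1%nat 0%nat s0 ^ 2 + uu 0%nat 1%nat s0 ^ 2)))).
  apply Rmult_integral in hzero. destruct hzero as [hz | hz]; [nra |].
  refine (eq_trans _ hz). unfold uu. rewrite ex, ey. ring.
Qed.

Lemma center_in_ball : in_ball Rad x0 y0.
Proof. exact (proj1 (hnear x0 y0 center_near)). Qed.

Lemma Hessian_gap : U 0%nat 2%nat x0 y0 < U 2%nat 0%nat x0 y0.
Proof. exact (proj2 (hnear x0 y0 center_near)). Qed.

Lemma critical_x :
  4 * eta_x r U x0 y0 * U 2%nat 0%nat x0 y0
  + (r ^ 2 - y0 ^ 2) * (r ^ 2 - x0 ^ 2) * (c0 / r ^ 2) * U 1%nat 0%nat x0 y0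
      * U 2%nat 0%nat x0 y0 * U 2%nat 0%nat x0 y0
  + (r ^ 2 - y0 ^ 2) * (r ^ 2 - x0 ^ 2) * U 3%nat 0%nat x0 y0 = 0.
Proof.
  assert (hloc := locally_disc_x x0 y0 del x0 y0 hdel (center_in_disc x0 y0 (del / 2) ltac:(lra))).
  assert (h := critical_along (fun s => s) (fun _ => y0) x0 1 0 (fun i j => U (S i) j x0 y0)
    ltac:(auto_derive; auto) ltac:(auto_derive; auto) eq_refl eq_refl
    (fun i j hij => dU_x i j x0 y0 ltac:(lia) center_in_ball) hloc).
  cbv beta in h. unfold eta_x. rewrite hb0. rewrite hb0 in h. refine (eq_trans _ h). ring.
Qed.

Lemma critical_y :
  4 * eta_y r U x0 y0 * U 2%nat 0%nat x0 y0
  + (r ^ 2 - y0 ^ 2) * (r ^ 2 - x0 ^ 2) * (c0 / r ^ 2) * U 0%nat 1%nat x0 y0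
      * U 0%nat 2%nat x0 y0 * U 2%nat 0%nat x0 y0
  + (r ^ 2 - y0 ^ 2) * (r ^ 2 - x0 ^ 2) * U 2%nat 1%nat x0 y0 = 0.
Proof.
  assert (hloc := locally_disc_y x0 y0 del x0 y0 hdel (center_in_disc x0 y0 (del / 2) ltac:(lra))).
  assert (h := critical_along (fun _ => x0) (fun s => s) y0 0 1 (fun i j => U i (S j) x0 y0)
    ltac:(auto_derive; auto) ltac:(auto_derive; auto) eq_refl eq_refl
    (fun i j hij => dU_y i j x0 y0 ltac:(lia) center_in_ball) hloc).
  cbv beta in h. unfold eta_y. rewrite hb0. rewrite hb0 in h. refine (eq_trans _ h). ring.
Qed.

Lemma det_x x y : near (del / 2) x y ->
  F 1%nat 0%nat x y = U 3%nat 0%nat x y * U 0%nat 2%nat x y + U 2%nat 0%nat x y * U 1%nat 2%nat x y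
                      - 2 * U 1%nat 1%nat x y * U 2%nat 1%nat x y.
Proof.
  intros h. pose proof (locally_disc_x x0 y0 del x y hdel h) as hloc.
  pose proof (proj1 (hnear x y (locally_singleton _ _ hloc))) as hb.
  apply (is_derive_loc_unique (fun s => F 0%nat 0%nat s y)
    (fun s => U 2%nat 0%nat s y * U 0%nat 2%nat s y - U 1%nat 1%nat s y ^ 2) x).
  - apply (filter_imp _ _ (fun s hs => eq_sym (hdet s y (proj1 (hnear s y hs)))) hloc).
  - exact (dF_x 0 0 x y ltac:(lia) hb).
  - apply (is_derive_det2 (fun s => U 2%nat 0%nat s y) (fun s => U 1%nat 1%nat s y)
      (fun s => U 0%nat 2%nat s y)); apply dU_x; (lia || exact hb).
Qed.

Lemma det_y_center :
  F 0%nat 1%nat x0 y0 = U 2%nat 1%nat x0 y0 * U 0%nat 2%nat x0 y0 + U 2%nat 0%nat x0 y0 * U 0%nat 3%nat x0 y0.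
Proof.
  transitivity (U 2%nat 1%nat x0 y0 * U 0%nat 2%nat x0 y0 + U 2%nat 0%nat x0 y0 * U 0%nat 3%nat x0 y0
                - 2 * U 1%nat 1%nat x0 y0 * U 1%nat 2%nat x0 y0); [| rewrite hb0; ring].
  pose proof (locally_disc_y x0 y0 del x0 y0 hdel (center_in_disc x0 y0 (del / 2) ltac:(lra))) as hloc.
  apply (is_derive_loc_unique (fun t => F 0%nat 0%nat x0 t)
    (fun t => U 2%nat 0%nat x0 t * U 0%nat 2%nat x0 t - U 1%nat 1%nat x0 t ^ 2) y0).
  - apply (filter_imp _ _ (fun t ht => eq_sym (hdet x0 t (proj1 (hnear x0 t ht)))) hloc).
  - exact (dF_y 0 0 x0 y0 ltac:(lia) center_in_ball).
  - apply (is_derive_det2 (fun t => U 2%nat 0%nat x0 t) (fun t => U 1%nat 1%nat x0 t)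
      (fun t => U 0%nat 2%nat x0 t)); apply dU_y; (lia || exact center_in_ball).
Qed.

Lemma det_xy_center :
  F 1%nat 1%nat x0 y0 =
    U 3%nat 1%nat x0 y0 * U 0%nat 2%nat x0 y0 + U 3%nat 0%nat x0 y0 * U 0%nat 3%nat x0 y0
    + U 2%nat 1%nat x0 y0 * U 1%nat 2%nat x0 y0 + U 2%nat 0%nat x0 y0 * U 1%nat 3%nat x0 y0
    - 2 * U 1%nat 2%nat x0 y0 * U 2%nat 1%nat x0 y0.
Proof.
  transitivity (U 3%nat 1%nat x0 y0 * U 0%nat 2%nat x0 y0 + U 3%nat 0%nat x0 y0 * U 0%nat 3%nat x0 y0
    + U 2%nat 1%nat x0 y0 * U 1%nat 2%nat x0 y0 + U 2%nat 0%nat x0 y0 * U 1%nat 3%nat x0 y0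
    - 2 * (U 1%nat 2%nat x0 y0 * U 2%nat 1%nat x0 y0 + U 1%nat 1%nat x0 y0 * U 2%nat 2%nat x0 y0));
    [| rewrite hb0; ring].
  pose proof (locally_disc_y x0 y0 (del / 2) x0 y0 ltac:(lra)
    (center_in_disc x0 y0 (del / 2 / 2) ltac:(lra))) as hloc.
  apply (is_derive_loc_unique (fun t => F 1%nat 0%nat x0 t)
    (fun t => U 3%nat 0%nat x0 t * U 0%nat 2%nat x0 t + U 2%nat 0%nat x0 t * U 1%nat 2%nat x0 t
              - 2 * U 1%nat 1%nat x0 t * U 2%nat 1%nat x0 t) y0).
  - apply (filter_imp _ _ (fun t ht => det_x x0 t ht) hloc).
  - exact (dF_y 1 0 x0 y0 ltac:(lia) center_in_ball).
  - apply (is_derive_bilin3 (fun t => U 3%nat 0%nat x0 t) (fun t => U 0%nat 2%nat x0 t)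
      (fun t => U 2%nat 0%nat x0 t) (fun t => U 1%nat 2%nat x0 t) (fun t => U 1%nat 1%nat x0 t)
      (fun t => U 2%nat 1%nat x0 t)); apply dU_y; (lia || exact center_in_ball).
Qed.

Lemma det_x_center :
  F 1%nat 0%nat x0 y0 = U 3%nat 0%nat x0 y0 * U 0%nat 2%nat x0 y0 + U 2%nat 0%nat x0 y0 * U 1%nat 2%nat x0 y0.
Proof. rewrite (det_x x0 y0 (center_in_disc x0 y0 (del / 2) ltac:(lra))), hb0. ring. Qed.

Lemma eta_x_center :
  eta_x r U x0 y0 = -2 * x0 * (r ^ 2 - y0 ^ 2)
    + 2 * U 2%nat 1%nat x0 y0 * (x0 * y0 * (y0 ^ 2 - x0 ^ 2)) / (U 2%nat 0%nat x0 y0 - U 0%nat 2%nat x0 y0).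
Proof. unfold eta_x. rewrite hb0. exact (eta_expr_deriv_x_diag _ _ _ _ _ _ _ _ Hessian_gap). Qed.

Lemma eta_y_center :
  eta_y r U x0 y0 = -2 * y0 * (r ^ 2 - x0 ^ 2)
    + 2 * U 1%nat 2%nat x0 y0 * (x0 * y0 * (y0 ^ 2 - x0 ^ 2)) / (U 2%nat 0%nat x0 y0 - U 0%nat 2%nat x0 y0).
Proof. unfold eta_y. rewrite hb0. exact (eta_expr_deriv_y_diag _ _ _ _ _ _ _ _ Hessian_gap). Qed.

Lemma is_derive_eta_x_x : is_derive (fun s => eta_x r U s y0) x0 (eta_x_x r U x0 y0).
Proof.
  apply (is_derive_eta_x_diag (fun s => U 2%nat 0%nat s y0) (fun s => U 1%nat 1%nat s y0)
    (fun s => U 0%nat 2%nat s y0) (fun s => U 3%nat 0%nat s y0) (fun s => U 2%nat 1%nat s y0)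
    (fun s => U 1%nat 2%nat s y0) x0 (U 4%nat 0%nat x0 y0) (U 3%nat 1%nat x0 y0) (U 2%nat 2%nat x0 y0));
    try (apply dU_x; [lia | exact center_in_ball]).
  - exact hb0.
  - exact Hessian_gap.
Qed.

Lemma is_derive_eta_y_y : is_derive (fun t => eta_y r U x0 t) y0 (eta_y_y r U x0 y0).
Proof.
  apply (is_derive_eta_y_diag (fun t => U 2%nat 0%nat x0 t) (fun t => U 1%nat 1%nat x0 t)
    (fun t => U 0%nat 2%nat x0 t) (fun t => U 2%nat 1%nat x0 t) (fun t => U 1%nat 2%nat x0 t)
    (fun t => U 0%nat 3%nat x0 t) y0 (U 2%nat 2%nat x0 y0) (U 1%nat 3%nat x0 y0) (U 0%nat 4%nat x0 y0));
    try (apply dU_y; [lia | exact center_in_ball]).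
  - exact hb0.
  - exact Hessian_gap.
Qed.

End AtMaximum.

Ltac positivity :=
  repeat match goal with
  | |- 0 <= _ + _ => apply Rplus_le_le_0_compat
  | |- 0 <= _ * _ => apply Rmult_le_pos
  | |- 0 <= _ / _ => apply Rdiv_le_0_compat
  | |- 0 < _ * _ => apply Rmult_lt_0_compat
  | |- 0 < _ / _ => apply Rdiv_lt_0_compat
  | |- 0 <= _ ^ 2 => apply pow2_ge_0
  | |- 0 <= _ ^ _ => apply pow_le
  | |- 0 < _ ^ _ => apply pow_lt
  | |- 0 <= Rabs _ => apply Rabs_pos
  end; try lra.

Lemma sq_add_le (u v : R) : (u + v) ^ 2 <= 2 * u ^ 2 + 2 * v ^ 2.
Proof. pose proof (pow2_ge_0 (u - v)). nra. Qed.

Lemma Rabs_le_of_sq_le (x r : R) : 0 <= r -> x ^ 2 <= r ^ 2 -> Rabs x <= r.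
Proof. intros hr h. rewrite <- (Rabs_right r) by lra. apply Rsqr_le_abs_0. rewrite !Rsqr_pow2. exact h. Qed.

Lemma Rabs_mult_le (a b A B : R) : Rabs a <= A -> Rabs b <= B -> Rabs (a * b) <= A * B.
Proof. intros ha hb. rewrite Rabs_mult. apply Rmult_le_compat; try apply Rabs_pos; assumption. Qed.

Lemma Rabs_scal_le (k Z z : R) : 0 <= k -> Rabs Z <= z -> Rabs (k * Z) <= k * z.
Proof. intros hk hz. rewrite Rabs_mult, (Rabs_right k) by lra. apply Rmult_le_compat_l; lra. Qed.

Lemma lb_of_Rabs_le (k Z z : R) : 0 <= k -> Rabs Z <= z -> - (k * z) <= k * Z.
Proof. intros hk hz. pose proof (Rabs_scal_le k Z z hk hz). pose proof (Rle_abs (- (k * Z))). rewrite Rabs_Ropp in *. lra. Qed.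

Lemma young_lb (C Cb x al : R) : Rabs C <= Cb -> 0 < al ->
  - (al * x ^ 2 + Cb ^ 2 / (4 * al)) <= C * x.
Proof.
  intros hC ha.
  assert (hCx : Rabs (C * x) <= Cb * Rabs x) by (apply Rabs_mult_le; lra).
  assert (E : al * x ^ 2 + Cb ^ 2 / (4 * al) - Cb * Rabs x = (2 * al * Rabs x - Cb) ^ 2 / (4 * al))
    by (rewrite <- pow2_abs; field; lra).
  assert (0 <= (2 * al * Rabs x - Cb) ^ 2 / (4 * al)) by (apply Rdiv_le_0_compat; [apply pow2_ge_0 | lra]).
  pose proof (Rle_abs (- (C * x))). rewrite Rabs_Ropp in *. lra.
Qed.

Lemma young_lb2 (C Cb x y al be : R) : Rabs C <= Cb -> 0 < al -> 0 < be -> Cb ^ 2 <= 4 * al * be ->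
  - (al * x ^ 2 + be * y ^ 2) <= C * x * y.
Proof.
  intros hC ha hb hd.
  assert (hCxy : Rabs (C * x * y) <= Cb * Rabs x * Rabs y) by (apply Rabs_mult_le; [apply Rabs_mult_le |]; lra).
  assert (E : 4 * al * (al * x ^ 2 + be * y ^ 2 - Cb * Rabs x * Rabs y)
              = (2 * al * Rabs x - Cb * Rabs y) ^ 2 + (4 * al * be - Cb ^ 2) * y ^ 2)
    by (rewrite <- (pow2_abs x), <- (pow2_abs y); ring).
  assert (0 <= (4 * al * be - Cb ^ 2) * y ^ 2) by (apply Rmult_le_pos; [lra | apply pow2_ge_0]).
  pose proof (pow2_ge_0 (2 * al * Rabs x - Cb * Rabs y)).
  assert (0 <= al * x ^ 2 + be * y ^ 2 - Cb * Rabs x * Rabs y) by (apply (Rmult_le_reg_l (4 * al)); lra).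
  pose proof (Rle_abs (- (C * x * y))). rewrite Rabs_Ropp in *. lra.
Qed.

Lemma Rdiv_le_Rdiv_of (a b c d : R) : 0 < b -> 0 < d -> a * d <= c * b -> a / b <= c / d.
Proof.
  intros hb hd h. apply (Rmult_le_reg_r (b * d)); [nra |].
  replace (a / b * (b * d)) with (a * d) by (field; lra).
  replace (c / d * (b * d)) with (c * b) by (field; lra). exact h.
Qed.

Lemma young_lb_le (C Cb x al Z : R) : Rabs C <= Cb -> 0 < al -> Cb ^ 2 / (4 * al) <= Z ->
  - (al * x ^ 2 + Z) <= C * x.
Proof. intros hC ha hZ. pose proof (young_lb C Cb x al hC ha). lra. Qed.

Lemma lb_of_Rabs_le_le (k Z z Y : R) : 0 <= k -> Rabs Z <= z -> k * z <= Y -> - Y <= k * Z.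
Proof. intros hk hZ hY. pose proof (lb_of_Rabs_le k Z z hk hZ). lra. Qed.

Lemma self_bound (z a e c : R) : 0 <= e <= 1 / 4 -> 0 <= c -> z <= a + e * z -> a <= 3 * c -> z <= 4 * c.
Proof. intros he hc hz ha. destruct (Rle_or_lt z 0); nra. Qed.

Lemma Rmult_le_compat_pos (a b A B : R) : 0 <= a <= A -> 0 <= b <= B -> a * b <= A * B.
Proof. intros [ha hA] [hb hB]. apply Rmult_le_compat; assumption. Qed.

Lemma const_r3_le (k r L : R) : 0 < r -> 1000 <= L -> 0 <= k <= 250 -> r ^ 3 * (k / L) <= r ^ 3 / 4.
Proof.
  intros hr hL hk. assert (0 < r ^ 3) by (apply pow_lt; lra).
  assert (k / L <= 1 / 4) by (apply (Rmult_le_reg_r L); [lra |]; field_simplify; lra).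
  assert (0 <= k / L) by (apply Rdiv_le_0_compat; lra). nra.
Qed.

Lemma main_assumption_bounds (r m M Gf Gu f H : R) : 0 < r -> 0 < m -> 0 < f -> f <= M -> 0 <= Gf -> 0 <= Gu ->
  H >= 10 ^ 3 * (1 + M + r * Gf + M / m * (Gu / r)) * r ^ 4 ->
  H >= 1000 * (1 + f) * r ^ 4 /\ H >= 1000 * r ^ 5 * Gf /\ H * m >= 1000 * M * Gu * r ^ 3.
Proof.
  intros hr hm hf hfM hGf hGu hH. assert (0 < r ^ 4) by (apply pow_lt; lra).
  assert (0 <= r * Gf) by positivity. assert (0 <= M / m * (Gu / r)) by positivity.
  assert (hge : forall s, 0 <= s <= 1 + M + r * Gf + M / m * (Gu / r) -> H >= 1000 * s * r ^ 4).
  { intros s hs. apply Rle_ge, (Rle_trans _ (10 ^ 3 * (1 + M + r * Gf + M / m * (Gu / r)) * r ^ 4)); [| lra].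
    apply Rmult_le_compat_r; [lra |]. replace (10 ^ 3) with 1000 by ring. apply Rmult_le_compat_l; lra. }
  split; [| split].
  - apply hge. lra.
  - replace (1000 * r ^ 5 * Gf) with (1000 * (r * Gf) * r ^ 4) by ring. apply hge. lra.
  - pose proof (hge (M / m * (Gu / r)) ltac:(lra)).
    replace (1000 * M * Gu * r ^ 3) with (1000 * (M / m * (Gu / r)) * r ^ 4 * m) by (field; lra).
    apply Rle_ge, Rmult_le_compat_r; lra.
Qed.

Section Estimates.

Variables (r X Y L l f eta : R).
Hypotheses (hr : 0 < r) (hX : X ^ 2 < r ^ 2) (hY : Y ^ 2 < r ^ 2)
  (heta : eta = (r ^ 2 - Y ^ 2) * (r ^ 2 - X ^ 2)) (hf : 0 < f) (hfl : f = L * l)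
  (hH : eta * L >= 1000 * (1 + f) * r ^ 4).

Let w := L - l.
Let D := Y ^ 2 - X ^ 2.
Let K := X * Y * D.

Lemma eta_pos : 0 < eta.
Proof. rewrite heta. apply Rmult_lt_0_compat; lra. Qed.

Lemma eta_le : eta <= r ^ 4.
Proof.
  rewrite heta. pose proof (pow2_ge_0 X). pose proof (pow2_ge_0 Y).
  replace (r ^ 4) with (r ^ 2 * r ^ 2) by ring. apply Rmult_le_compat; lra.
Qed.

Lemma L_ge : 1000 * (1 + f) <= L.
Proof.
  pose proof eta_pos. pose proof eta_le. assert (0 < r ^ 4) by (apply pow_lt; lra).
  apply (Rmult_le_reg_l (r ^ 4)); [lra |].
  destruct (Rle_or_lt 0 L); nra.
Qed.

Lemma l_eq : l = f / L.
Proof. pose proof L_ge. rewrite hfl. field. lra. Qed.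

Lemma l_pos : 0 < l.
Proof. pose proof L_ge. rewrite l_eq. apply Rdiv_lt_0_compat; lra. Qed.

Lemma l_le : l <= 1 / 1000.
Proof. pose proof L_ge. rewrite l_eq. apply (Rmult_le_reg_r L); [lra |]. field_simplify; lra. Qed.

Lemma l_lt_L : l < L.
Proof. pose proof L_ge. pose proof l_le. lra. Qed.

Lemma solve_det_deriv (a c g : R) : g = a * l + L * c -> c = (g - a * l) / L.
Proof. pose proof L_ge. intros h. rewrite h. field. lra. Qed.

Lemma w_ge : w >= 99 / 100 * L.
Proof. pose proof L_ge. pose proof l_le. unfold w. lra. Qed.

Lemma abs_X_le : Rabs X <= r.
Proof. apply Rabs_le_of_sq_le; lra. Qed.

Lemma abs_Y_le : Rabs Y <= r.
Proof. apply Rabs_le_of_sq_le; lra. Qed.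

Lemma abs_D_le : Rabs D <= r ^ 2.
Proof. unfold D. apply Rabs_le. pose proof (pow2_ge_0 X). pose proof (pow2_ge_0 Y). lra. Qed.

Lemma abs_K_le : Rabs K <= r ^ 4.
Proof.
  unfold K. replace (r ^ 4) with (r * r * r ^ 2) by ring.
  apply Rabs_mult_le; [apply Rabs_mult_le; [apply abs_X_le | apply abs_Y_le] | apply abs_D_le].
Qed.

Lemma first_estimate (a2 : R) :
  4 * (f / L) * ((-2 * X * (r ^ 2 - Y ^ 2) + 2 * a2 * K / w) ^ 2 / eta ^ 2)
    <= 8 * 4 * f * r ^ 6 / (eta ^ 2 * L) + L / 4 * (a2 / L) ^ 2.
Proof.
  pose proof eta_pos as he. pose proof eta_le. pose proof L_ge. pose proof w_ge as hw.
  set (k := a2 * K / w).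
  assert (hk : k ^ 2 * w ^ 2 <= a2 ^ 2 * r ^ 8).
  { replace (k ^ 2 * w ^ 2) with (a2 ^ 2 * K ^ 2) by (unfold k; field; lra).
    apply Rmult_le_compat_l; [apply pow2_ge_0 |]. rewrite <- pow2_abs.
    replace (r ^ 8) with ((r ^ 4) ^ 2) by ring. apply pow_incr. split; [apply Rabs_pos | apply abs_K_le]. }
  assert (hXA : X ^ 2 * (r ^ 2 - Y ^ 2) ^ 2 <= r ^ 6).
  { pose proof (pow2_ge_0 X). pose proof (pow2_ge_0 Y).
    replace (r ^ 6) with (r ^ 2 * r ^ 4) by ring. apply Rmult_le_compat; [lra | apply pow2_ge_0 | lra | nra]. }
  assert (he1 : (-2 * X * (r ^ 2 - Y ^ 2) + 2 * k) ^ 2 <= 8 * r ^ 6 + 8 * k ^ 2).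
  { eapply Rle_trans; [apply sq_add_le | nra]. }
  (* the main assumption makes [eta * w] dominate [r ^ 4 sqrt f] *)
  assert (hkey : 128 * f * k ^ 2 <= eta ^ 2 * a2 ^ 2).
  { assert (hew : 128 * f * r ^ 8 <= eta ^ 2 * w ^ 2).
    { assert ((eta * L) ^ 2 >= (1000 * (1 + f) * r ^ 4) ^ 2) by (apply Rle_ge, pow_incr; nra).
      assert (eta ^ 2 * w ^ 2 >= eta ^ 2 * (L ^ 2 * (99 / 100) ^ 2)) by (apply Rle_ge, Rmult_le_compat_l; nra).
      nra. }
    assert (0 < w ^ 2) by (apply pow_lt; lra).
    apply (Rmult_le_reg_r (w ^ 2)); [lra |]. nra. }
  replace (2 * a2 * K / w) with (2 * k) by (unfold k; field; lra).
  replace (4 * (f / L) * ((-2 * X * (r ^ 2 - Y ^ 2) + 2 * k) ^ 2 / eta ^ 2))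
    with (4 * f * (-2 * X * (r ^ 2 - Y ^ 2) + 2 * k) ^ 2 / (eta ^ 2 * L)) by (field; lra).
  replace (8 * 4 * f * r ^ 6 / (eta ^ 2 * L) + L / 4 * (a2 / L) ^ 2)
    with ((32 * f * r ^ 6 + eta ^ 2 * a2 ^ 2 / 4) / (eta ^ 2 * L)) by (field; lra).
  unfold Rdiv. apply Rmult_le_compat_r; [left; apply Rinv_0_lt_compat, Rmult_lt_0_compat; [apply pow_lt |]; lra |].
  nra.
Qed.


Let H := eta * L.
Let rho := L / w.

Lemma H_pos : 0 < H.
Proof. pose proof eta_pos. pose proof L_ge. unfold H. apply Rmult_lt_0_compat; lra. Qed.

Lemma rho_pos : 0 < rho.
Proof. pose proof w_ge. pose proof L_ge. unfold rho. apply Rdiv_lt_0_compat; lra. Qed.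

Lemma rho_le : rho <= 100 / 99.
Proof.
  pose proof w_ge. pose proof L_ge. unfold rho. apply Rdiv_le_Rdiv_of; lra.
Qed.

Lemma rho_sq_le : rho ^ 2 <= 103 / 100.
Proof. pose proof rho_pos. pose proof rho_le. nra. Qed.

Lemma rho4_le : rho ^ 4 <= 107 / 100.
Proof. pose proof rho_pos. pose proof rho_sq_le. replace (rho ^ 4) with (rho ^ 2 * rho ^ 2) by ring. nra. Qed.

Lemma small_fL2 : f / L ^ 2 <= 1 / 1000000.
Proof. pose proof L_ge. apply Rdiv_le_Rdiv_of; [apply pow_lt; lra | lra | nra]. Qed.

Lemma small_r4LH : r ^ 4 / (L * H) <= 1 / 1000000.
Proof.
  pose proof L_ge. assert (H >= 1000 * (1 + f) * r ^ 4) by exact hH. assert (0 < r ^ 4) by (apply pow_lt; lra).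
  assert (L * H >= 1000 * (1000 * r ^ 4)) by (apply Rle_ge, Rmult_le_compat; nra).
  apply Rdiv_le_Rdiv_of; lra.
Qed.

Lemma small_fr4HL : f * r ^ 4 / (H * L) <= 1 / 1000000.
Proof.
  pose proof L_ge. assert (H >= 1000 * (1 + f) * r ^ 4) by exact hH. assert (0 < r ^ 4) by (apply pow_lt; lra).
  assert (0 < f * r ^ 4) by (apply Rmult_lt_0_compat; lra).
  assert (H * L >= (1000 * f * r ^ 4) * 1000) by (apply Rle_ge, Rmult_le_compat; lra).
  apply Rdiv_le_Rdiv_of; lra.
Qed.

Lemma small_fr8HH : f * r ^ 8 / (H * H) <= 1 / 1000000.
Proof.
  pose proof L_ge. pose proof eta_pos. assert (0 < r ^ 4) by (apply pow_lt; lra).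
  assert (H >= 1000 * (1 + f) * r ^ 4) by exact hH.
  assert (H * H >= (1000 * (1 + f) * r ^ 4) * (1000 * (1 + f) * r ^ 4)) by (apply Rle_ge, Rmult_le_compat; nra).
  apply Rdiv_le_Rdiv_of; [nra | lra |]. nra.
Qed.

Lemma abs_YD_le : Rabs (Y * D) <= r ^ 3.
Proof. replace (r ^ 3) with (r * r ^ 2) by ring. exact (Rabs_mult_le _ _ _ _ abs_Y_le abs_D_le). Qed.

Lemma abs_XD_le : Rabs (X * D) <= r ^ 3.
Proof. replace (r ^ 3) with (r * r ^ 2) by ring. exact (Rabs_mult_le _ _ _ _ abs_X_le abs_D_le). Qed.

Lemma abs_X2Y_le : Rabs (X ^ 2 * Y) <= r ^ 3.
Proof.
  replace (r ^ 3) with (r ^ 2 * r) by ring. apply Rabs_mult_le; [| exact abs_Y_le].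
  rewrite Rabs_right by (apply Rle_ge, pow2_ge_0). lra.
Qed.

Lemma abs_XY2_le : Rabs (X * Y ^ 2) <= r ^ 3.
Proof.
  replace (r ^ 3) with (r * r ^ 2) by ring. apply Rabs_mult_le; [exact abs_X_le |].
  rewrite Rabs_right by (apply Rle_ge, pow2_ge_0). lra.
Qed.

Lemma X2Y2_le : X ^ 2 * Y ^ 2 <= r ^ 4.
Proof.
  pose proof (pow2_ge_0 X). pose proof (pow2_ge_0 Y).
  replace (r ^ 4) with (r ^ 2 * r ^ 2) by ring. apply Rmult_le_compat; lra.
Qed.

Section SecondEstimate.

Variables (m M Gf Gu f1 u1 u2 a1 a2 c1 eta1 eta2 : R).
Hypotheses (hm : 0 < m) (hfM : f <= M)
  (hGf : eta * L >= 1000 * r ^ 5 * Gf) (hGu : eta * L * m >= 1000 * M * Gu * r ^ 3)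
  (hf1 : Rabs f1 <= Gf) (hu1 : Rabs u1 <= Gu) (hu2 : Rabs u2 <= Gu)
  (heta1 : eta1 = -2 * X * (r ^ 2 - Y ^ 2) + 2 * a2 * K / w)
  (heta2 : eta2 = -2 * Y * (r ^ 2 - X ^ 2) + 2 * c1 * K / w)
  (hF1 : f1 = a1 * l + L * c1)
  (hC1 : 4 * eta1 * L + eta * (32 / m / r ^ 2) * u1 * L * L + eta * a1 = 0)
  (hC2 : 4 * eta2 * L + eta * (32 / m / r ^ 2) * u2 * l * L + eta * a2 = 0).

Let P := 2 * r ^ 4 / w.
Let q := 4 * f / (eta * L).
Let k := 4 * L / eta.
Let V := f * (32 / m / r ^ 2) * Gu.

Lemma P_bound : 0 <= P <= 3 * r ^ 4 / L.
Proof.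
  pose proof w_ge. pose proof L_ge. assert (0 < r ^ 4) by (apply pow_lt; lra). unfold P. split.
  - apply Rdiv_le_0_compat; lra.
  - apply (Rmult_le_reg_r (w * L)); [nra |]. field_simplify; nra.
Qed.

Lemma q_bound : 0 <= q <= 4 / (1000 * r ^ 4).
Proof.
  pose proof eta_pos. pose proof L_ge. assert (0 < r ^ 4) by (apply pow_lt; lra). unfold q. split.
  - apply Rdiv_le_0_compat; nra.
  - apply Rdiv_le_Rdiv_of; [nra | lra | lra].
Qed.

Lemma qk_bound : q * k <= 16 * L ^ 2 / (10 ^ 6 * r ^ 8).
Proof.
  pose proof eta_pos. pose proof L_ge. assert (0 < r ^ 4) by (apply pow_lt; lra).
  assert (hH2 : (eta * L) ^ 2 >= (1000 * (1 + f) * r ^ 4) ^ 2) by (apply Rle_ge, pow_incr; nra).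
  replace (q * k) with (16 * L ^ 2 * f / (eta * L) ^ 2) by (unfold q, k; field; nra).
  apply Rdiv_le_Rdiv_of; [apply pow_lt; nra | nra |].
  assert (f * 10 ^ 6 * r ^ 8 <= (1000 * (1 + f) * r ^ 4) ^ 2) by nra.
  assert (0 <= 16 * L ^ 2) by nra. nra.
Qed.

Lemma V_bound : 0 <= V <= 32 * L / (1000 * r).
Proof.
  pose proof eta_le. pose proof L_ge. assert (0 < r ^ 4) by (apply pow_lt; lra).
  assert (hGu0 : 0 <= Gu) by (pose proof (Rabs_pos u1); lra).
  assert (hMGu : 1000 * (M * Gu) * r <= r ^ 2 * L * m).
  { assert (eta * L * m <= r ^ 4 * L * m) by (apply Rmult_le_compat_r; [lra |]; apply Rmult_le_compat_r; lra).
    apply (Rmult_le_reg_r (r ^ 2)); [apply pow_lt; lra |].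
    replace (1000 * (M * Gu) * r * r ^ 2) with (1000 * M * Gu * r ^ 3) by ring.
    replace (r ^ 2 * L * m * r ^ 2) with (r ^ 4 * L * m) by ring. lra. }
  unfold V. split.
  - apply Rmult_le_pos; [| exact hGu0]. apply Rmult_le_pos; [lra |]. apply Rdiv_le_0_compat; [| apply pow_lt; lra].
    apply Rdiv_le_0_compat; lra.
  - replace (f * (32 / m / r ^ 2) * Gu) with (32 * (f * Gu) / (m * r ^ 2)) by (field; split; lra).
    apply Rdiv_le_Rdiv_of; [apply Rmult_lt_0_compat; [| apply pow_lt]; lra | lra |].
    assert (f * Gu <= M * Gu) by (apply Rmult_le_compat_r; lra). nra.
Qed.

Lemma Gf_bound : Gf <= L / (1000 * r).
Proof.
  pose proof eta_le. pose proof L_ge. assert (0 < r ^ 4) by (apply pow_lt; lra).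
  replace Gf with (Gf / 1) by field. apply Rdiv_le_Rdiv_of; [lra | lra |].
  assert (eta * L <= r ^ 4 * L) by (apply Rmult_le_compat_r; lra).
  apply (Rmult_le_reg_r (r ^ 4)); [lra |].
  replace (Gf * (1000 * r) * r ^ 4) with (1000 * r ^ 5 * Gf) by ring. lra.
Qed.

Lemma eta_deriv_diag_le (Z W c : R) : Rabs Z <= r -> W ^ 2 < r ^ 2 ->
  Rabs (-2 * Z * (r ^ 2 - W ^ 2) + 2 * c * K / w) <= 2 * r ^ 3 + P * Rabs c.
Proof.
  intros hZ hW. pose proof w_ge. pose proof L_ge. pose proof abs_K_le.
  eapply Rle_trans; [apply Rabs_triang | apply Rplus_le_compat].
  - assert (Rabs (Z * (r ^ 2 - W ^ 2)) <= r * r ^ 2).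
    { apply Rabs_mult_le; [exact hZ |]. rewrite Rabs_right; pose proof (pow2_ge_0 W); lra. }
    replace (-2 * Z * (r ^ 2 - W ^ 2)) with (- (2 * (Z * (r ^ 2 - W ^ 2)))) by ring.
    rewrite Rabs_Ropp, Rabs_mult, (Rabs_right 2) by lra. lra.
  - replace (2 * c * K / w) with (2 / w * K * c) by (field; lra).
    unfold P. replace (2 * r ^ 4 / w * Rabs c) with (2 / w * r ^ 4 * Rabs c) by (field; lra).
    rewrite !Rmult_assoc. apply Rabs_scal_le; [apply Rdiv_le_0_compat; lra |]. apply Rabs_mult_le; lra.
Qed.

Lemma c1_expr : c1 = f1 / L + q * eta1 + f * (32 / m / r ^ 2) * u1.
Proof.
  pose proof eta_pos. pose proof L_ge.
  assert (ha1 : a1 = - (4 * eta1 * L + eta * (32 / m / r ^ 2) * u1 * L * L) / eta).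
  { apply (Rmult_eq_reg_l eta); [| lra].
    replace (eta * (- (4 * eta1 * L + eta * (32 / m / r ^ 2) * u1 * L * L) / eta))
      with (- (4 * eta1 * L + eta * (32 / m / r ^ 2) * u1 * L * L)) by (field; lra). lra. }
  rewrite (solve_det_deriv _ _ _ hF1), ha1, l_eq. unfold q. field. repeat split; lra.
Qed.

Lemma a2_expr : a2 = - (k * eta2 + f * (32 / m / r ^ 2) * u2).
Proof.
  pose proof eta_pos. pose proof L_ge.
  apply (Rmult_eq_reg_l eta); [| lra]. unfold k.
  replace (eta * - (4 * L / eta * eta2 + f * (32 / m / r ^ 2) * u2))
    with (- (4 * eta2 * L + eta * (32 / m / r ^ 2) * u2 * (f / L) * L)) by (field; lra).
  rewrite <- l_eq. lra.
Qed.

Lemma k_nonneg : 0 <= k.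
Proof. pose proof eta_pos. pose proof L_ge. unfold k. apply Rdiv_le_0_compat; lra. Qed.

(* [|eta2|] controls [|a2|] (critical point in [y]), hence [|eta1|], hence [|c1|]
   (critical point in [x]), hence [|eta2|] again. *)
Lemma eta2_loop :
  Rabs eta2 <= 2 * r ^ 3 + P * (Gf / L) + P * q * (2 * r ^ 3) + P * q * P * V + P * V
               + P * q * P * k * Rabs eta2.
Proof.
  pose proof P_bound as hP. pose proof q_bound as hq. pose proof V_bound. pose proof k_nonneg.
  pose proof L_ge. pose proof eta_pos.
  assert (hgg : 0 <= 32 / m / r ^ 2) by (apply Rdiv_le_0_compat; [apply Rdiv_le_0_compat |]; try apply pow_lt; lra).
  assert (hVu : forall u, Rabs u <= Gu -> Rabs (f * (32 / m / r ^ 2) * u) <= V).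
  { intros u hu. unfold V. apply Rabs_scal_le; [apply Rmult_le_pos; lra | exact hu]. }
  assert (B1 : Rabs eta2 <= 2 * r ^ 3 + P * Rabs c1) by (rewrite heta2; apply eta_deriv_diag_le; [apply abs_Y_le | lra]).
  assert (B3 : Rabs eta1 <= 2 * r ^ 3 + P * Rabs a2) by (rewrite heta1; apply eta_deriv_diag_le; [apply abs_X_le | lra]).
  assert (B2 : Rabs c1 <= Gf / L + q * Rabs eta1 + V).
  { rewrite c1_expr. eapply Rle_trans; [apply Rabs_triang | apply Rplus_le_compat; [| exact (hVu u1 hu1)]].
    eapply Rle_trans; [apply Rabs_triang | apply Rplus_le_compat].
    - unfold Rdiv. rewrite Rabs_mult, (Rabs_right (/ L)) by (apply Rle_ge, Rlt_le, Rinv_0_lt_compat; lra).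
      apply Rmult_le_compat_r; [apply Rlt_le, Rinv_0_lt_compat; lra | exact hf1].
    - apply Rabs_scal_le; [lra | apply Rle_refl]. }
  assert (B4 : Rabs a2 <= k * Rabs eta2 + V).
  { rewrite a2_expr, Rabs_Ropp. eapply Rle_trans; [apply Rabs_triang | apply Rplus_le_compat; [| exact (hVu u2 hu2)]].
    apply Rabs_scal_le; [lra | apply Rle_refl]. }
  pose proof (Rmult_le_compat_l P _ _ (proj1 hP) B2).
  pose proof (Rmult_le_compat_l (P * q) _ _ (Rmult_le_pos _ _ (proj1 hP) (proj1 hq)) B3).
  pose proof (Rmult_le_compat_l (P * q * P) _ _ ltac:(apply Rmult_le_pos; [apply Rmult_le_pos |]; lra) B4).
  nra.
Qed.

Lemma eta2_loop_gain : 0 <= P * q * P * k <= 1 / 4.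
Proof.
  pose proof P_bound as hP. pose proof q_bound as hq. pose proof qk_bound. pose proof k_nonneg. pose proof L_ge.
  assert (hPP : P * P <= (3 * r ^ 4 / L) * (3 * r ^ 4 / L)) by (apply Rmult_le_compat_pos; lra).
  assert (hgain : P * P * (q * k) <= (3 * r ^ 4 / L) * (3 * r ^ 4 / L) * (16 * L ^ 2 / (10 ^ 6 * r ^ 8)))
    by (apply Rmult_le_compat_pos; split; nra).
  replace ((3 * r ^ 4 / L) * (3 * r ^ 4 / L) * (16 * L ^ 2 / (10 ^ 6 * r ^ 8))) with (144 / 10 ^ 6) in hgain
    by (field; repeat split; lra).
  replace (P * q * P * k) with (P * P * (q * k)) by ring. split; [apply Rmult_le_pos; nra | lra].
Qed.

Lemma eta2_loop_offset :
  2 * r ^ 3 + P * (Gf / L) + P * q * (2 * r ^ 3) + P * q * P * V + P * V <= 3 * r ^ 3.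
Proof.
  pose proof P_bound as hP. pose proof q_bound as hq. pose proof V_bound. pose proof Gf_bound. pose proof L_ge.
  assert (0 < r ^ 4) by (apply pow_lt; lra). pose proof (pow_lt r 3 hr).
  assert (h1 : P * (Gf / L) <= r ^ 3 * (3 / 1000 / L)).
  { eapply Rle_trans; [apply (Rmult_le_compat_pos _ _ (3 * r ^ 4 / L) (L / (1000 * r) / L)) |].
    - exact hP.
    - split; [apply Rdiv_le_0_compat; [pose proof (Rabs_pos f1) |]; lra |].
      apply (Rmult_le_compat_r (/ L)); [apply Rlt_le, Rinv_0_lt_compat |]; lra.
    - right. field. lra. }
  assert (h2 : P * q * (2 * r ^ 3) <= r ^ 3 * (24 / 1000 / L)).
  { eapply Rle_trans; [apply (Rmult_le_compat_pos _ _ (3 * r ^ 4 / L * (4 / (1000 * r ^ 4))) (2 * r ^ 3)) |].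
    - split; [apply Rmult_le_pos |]; [lra | lra | apply Rmult_le_compat_pos; lra].
    - lra.
    - right. field. lra. }
  assert (h3 : P * V <= r ^ 3 * (96 / 1000)).
  { eapply Rle_trans; [apply (Rmult_le_compat_pos _ _ (3 * r ^ 4 / L) (32 * L / (1000 * r))); lra |].
    right. field. lra. }
  assert (h4 : P * q * P * V <= r ^ 3 * (12 * 96 / 10 ^ 6 / L)).
  { replace (P * q * P * V) with ((P * q) * (P * V)) by ring.
    eapply Rle_trans; [apply (Rmult_le_compat_pos _ _ (3 * r ^ 4 / L * (4 / (1000 * r ^ 4))) (r ^ 3 * (96 / 1000))) |].
    - split; [apply Rmult_le_pos |]; [lra | lra | apply Rmult_le_compat_pos; lra].
    - split; [apply Rmult_le_pos |]; lra.
    - right. field. lra. }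
  pose proof (const_r3_le (3 / 1000) r L hr ltac:(lra) ltac:(lra)).
  pose proof (const_r3_le (24 / 1000) r L hr ltac:(lra) ltac:(lra)).
  pose proof (const_r3_le (12 * 96 / 10 ^ 6) r L hr ltac:(lra) ltac:(lra)).
  lra.
Qed.

Lemma eta2_bound : Rabs eta2 <= 4 * r ^ 3.
Proof.
  pose proof (pow_lt r 3 hr).
  exact (self_bound _ _ _ (r ^ 3) eta2_loop_gain ltac:(lra) eta2_loop eta2_loop_offset).
Qed.

Lemma second_estimate :
  4 * f * (32 / m / r ^ 2) * (eta2 / eta) * u2
    >= - (4 * 4 * f * (32 / m / r ^ 2) * (r ^ 4 / eta) * (Rabs u2 / r)).
Proof.
  pose proof eta_pos. pose proof eta2_bound.
  assert (hk : 0 <= 4 * f * (32 / m / r ^ 2) / eta)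
    by (apply Rdiv_le_0_compat; [apply Rmult_le_pos; [lra | apply Rdiv_le_0_compat; [apply Rdiv_le_0_compat |]; try apply pow_lt; lra] | lra]).
  replace (4 * f * (32 / m / r ^ 2) * (eta2 / eta) * u2) with (4 * f * (32 / m / r ^ 2) / eta * (eta2 * u2))
    by (field; lra).
  replace (- (4 * 4 * f * (32 / m / r ^ 2) * (r ^ 4 / eta) * (Rabs u2 / r)))
    with (4 * f * (32 / m / r ^ 2) / eta * (- (4 * r ^ 3 * Rabs u2))) by (field; lra).
  apply Rle_ge, Rmult_le_compat_l; [exact hk |].
  assert (Rabs (eta2 * u2) <= 4 * r ^ 3 * Rabs u2) by (apply Rabs_mult_le; [lra | apply Rle_refl]).
  pose proof (Rle_abs (- (eta2 * u2))). rewrite Rabs_Ropp in *. lra.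
Qed.

End SecondEstimate.

Section ThirdEstimate.

Variables (m f1 f2 f12 a1 a2 c1 c2 bxx byy eta2 : R).
Hypotheses (hm : 0 < m) (hmf : m <= f)
  (hF1 : f1 = a1 * l + L * c1) (hF2 : f2 = a2 * l + L * c2)
  (hf12 : f12 = bxx * l + a1 * c2 + a2 * c1 + L * byy - 2 * c1 * a2)
  (heta2 : eta2 = -2 * Y * (r ^ 2 - X ^ 2) + 2 * c1 * K / w).

Let B := r ^ 2 - X ^ 2.
Let q1 := 2 * X + 2 * X * Y * a2 / w.
Let q2 := 2 * X * Y * c1 / w.
Let Zf := f * r ^ 6 / (eta * L).
Let al := eta / (32 * L).
Let be := eta * f / (16 * L ^ 3).

Ltac bounds :=
  pose proof L_ge; pose proof l_pos; pose proof l_eq; pose proof eta_pos; pose proof eta_le;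
  pose proof rho_pos; pose proof rho_le; pose proof rho_sq_le; pose proof rho4_le; pose proof w_ge;
  pose proof abs_X_le; pose proof abs_Y_le; pose proof abs_D_le; pose proof abs_K_le;
  pose proof (pow_lt r 2 hr); pose proof (pow_lt r 3 hr); pose proof (pow_lt r 4 hr);
  pose proof (pow2_ge_0 rho); pose proof H_pos.

(* [expand_eta_second] splits [4 (l eta_11 + L eta_22)] into terms; each [lb_T]
   below bounds the term [T] from below by pieces of [eta] times the right-hand
   side of [third_estimate].  [al] and [be] are the shares of the [a2 ^ 2] and
   [a1 ^ 2] terms handed out through Young's inequality. *)
Lemma expand_eta_second :
  4 * (l * eta_xx_diag r X Y w (a1 - c1) a2 bxx + L * eta_yy_diag r X Y w (a2 - c2) c1 byy) =
    -8 * B * L - 8 * B * l + 8 * l * D + 8 * K * f12 / w + 8 * K * (a2 * c1 - a1 * c2) / w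
    + 16 * l * a2 * Y * D / w - 16 * l * a2 * (a1 - c1) * K / w ^ 2 + 8 * l * a2 ^ 2 * D ^ 2 / w ^ 2
    + 16 * L * c1 * X * D / w - 16 * L * c1 * (a2 - c2) * K / w ^ 2 + 8 * L * c1 ^ 2 * D ^ 2 / w ^ 2
    + 16 * X * l * q1 + 16 * Y * L * q2 - 8 * l * q1 ^ 2 - 8 * L * q2 ^ 2.
Proof.
  pose proof L_ge. pose proof w_ge.
  assert (hbyy : byy = (f12 - bxx * l - a1 * c2 - a2 * c1 + 2 * c1 * a2) / L) by (rewrite hf12; field; lra).
  unfold eta_xx_diag, eta_yy_diag, q1, q2, K, D, B. rewrite hbyy. field. lra.
Qed.


Lemma al_pos : 0 < al.
Proof. bounds. unfold al. apply Rdiv_lt_0_compat; lra. Qed.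

Lemma be_pos : 0 < be.
Proof. bounds. unfold be. apply Rdiv_lt_0_compat; [nra | apply Rmult_lt_0_compat; [| apply pow_lt]; lra]. Qed.

Lemma Zf_nonneg : 0 <= Zf.
Proof. bounds. unfold Zf. apply Rdiv_le_0_compat; [apply Rmult_le_pos; [| apply pow_le]; lra | nra]. Qed.

Lemma lb_Bl : - (8 * f * r ^ 2 / L) <= -8 * B * l.
Proof.
  bounds. replace (8 * f * r ^ 2 / L) with (8 * r ^ 2 * l) by (rewrite l_eq; field; lra).
  unfold B. pose proof (pow2_ge_0 X). nra.
Qed.

Lemma lb_lD : - (8 * f * r ^ 2 / L) <= 8 * l * D.
Proof.
  bounds. replace (8 * f * r ^ 2 / L) with (8 * r ^ 2 * l) by (rewrite l_eq; field; lra).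
  pose proof (Rle_abs (- D)). rewrite Rabs_Ropp in *. nra.
Qed.

Lemma lb_Kf12 : - (16 * Rabs f12 * r ^ 4 / L) <= 8 * K * f12 / w.
Proof.
  bounds. replace (8 * K * f12 / w) with ((8 * rho / L) * (K * f12)) by (unfold rho; field; lra).
  apply (lb_of_Rabs_le_le _ _ (r ^ 4 * Rabs f12)); [apply Rdiv_le_0_compat; lra | apply Rabs_mult_le; lra |].
  replace (8 * rho / L * (r ^ 4 * Rabs f12)) with (8 * rho * (r ^ 4 * Rabs f12 / L)) by (field; lra).
  replace (16 * Rabs f12 * r ^ 4 / L) with (16 * (r ^ 4 * Rabs f12 / L)) by (field; lra).
  apply Rmult_le_compat_r; [apply Rdiv_le_0_compat; [apply Rmult_le_pos; [| apply Rabs_pos] |] |]; lra.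
Qed.

Lemma lb_Kcross :
  - (al * a2 ^ 2 + 3 * Rabs f1 ^ 2 * r ^ 4 / L)
  - (2 * be * a1 ^ 2 + 256 * Rabs f2 ^ 2 * r ^ 8 / (eta * L * f))
    <= 8 * K * (a2 * c1 - a1 * c2) / w.
Proof.
  bounds. pose proof small_r4LH. pose proof al_pos. pose proof be_pos.
  replace (8 * K * (a2 * c1 - a1 * c2) / w)
    with ((8 * rho / L ^ 2 * (K * f1)) * a2 + (8 * rho / L ^ 2 * (- (K * f2))) * a1)
    by (rewrite (solve_det_deriv _ _ _ hF1), (solve_det_deriv _ _ _ hF2); unfold rho; field; lra).
  apply Rplus_le_compat.
  - apply (young_lb_le _ (8 * rho / L ^ 2 * (r ^ 4 * Rabs f1))); [| exact al_pos |].
    + apply Rabs_scal_le; [apply Rdiv_le_0_compat; [| apply pow_lt] |]; [lra | lra | apply Rabs_mult_le; lra].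
    + replace ((8 * rho / L ^ 2 * (r ^ 4 * Rabs f1)) ^ 2 / (4 * al))
        with (512 * (rho ^ 2 * (r ^ 4 / (L * H))) * (Rabs f1 ^ 2 * r ^ 4 / L)) by (unfold al, H; field; lra).
      replace (3 * Rabs f1 ^ 2 * r ^ 4 / L) with (3 * (Rabs f1 ^ 2 * r ^ 4 / L)) by (field; lra).
      apply Rmult_le_compat_r; [apply Rdiv_le_0_compat; [apply Rmult_le_pos; [apply pow2_ge_0 |] |] ; lra |].
      assert (0 <= r ^ 4 / (L * H))
        by (apply Rdiv_le_0_compat; [lra | apply Rmult_lt_0_compat; [| unfold H; apply Rmult_lt_0_compat]; lra]).
      assert (rho ^ 2 * (r ^ 4 / (L * H)) <= 103 / 100 * (1 / 1000000))
        by (apply Rmult_le_compat_pos; split; lra).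
      lra.
  - apply (young_lb_le _ (8 * rho / L ^ 2 * (r ^ 4 * Rabs f2))); [| nra |].
    + apply Rabs_scal_le; [apply Rdiv_le_0_compat; [| apply pow_lt] |]; [lra | lra |].
      rewrite Rabs_Ropp. apply Rabs_mult_le; lra.
    + replace ((8 * rho / L ^ 2 * (r ^ 4 * Rabs f2)) ^ 2 / (4 * (2 * be)))
        with (128 * rho ^ 2 * (Rabs f2 ^ 2 * r ^ 8 / (eta * L * f))) by (unfold be; field; repeat split; lra).
      replace (256 * Rabs f2 ^ 2 * r ^ 8 / (eta * L * f)) with (256 * (Rabs f2 ^ 2 * r ^ 8 / (eta * L * f)))
        by (field; repeat split; lra).
      apply Rmult_le_compat_r; [| lra].
      apply Rdiv_le_0_compat; [apply Rmult_le_pos; [apply pow2_ge_0 | apply pow_le; lra] | nra].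
Qed.

Lemma lb_la2YD : - (al * a2 ^ 2 + 2304 * Zf) <= 16 * l * a2 * Y * D / w.
Proof.
  bounds. pose proof small_fL2. pose proof Zf_nonneg.
  replace (16 * l * a2 * Y * D / w) with ((16 * f * rho / L ^ 2 * (Y * D)) * a2)
    by (rewrite l_eq; unfold rho; field; lra).
  apply (young_lb_le _ (16 * f * rho / L ^ 2 * r ^ 3)); [| exact al_pos |].
  - apply Rabs_scal_le; [apply Rdiv_le_0_compat; [| apply pow_lt]; nra | exact abs_YD_le].
  - replace ((16 * f * rho / L ^ 2 * r ^ 3) ^ 2 / (4 * al)) with (2048 * (rho ^ 2 * (f / L ^ 2)) * Zf)
      by (unfold al, Zf; field; lra).
    apply Rmult_le_compat_r; [exact Zf_nonneg |].
    assert (0 <= f / L ^ 2) by (apply Rdiv_le_0_compat; [| apply pow_lt]; lra).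
    assert (rho ^ 2 * (f / L ^ 2) <= 103 / 100 * (1 / 1000000)) by (apply Rmult_le_compat_pos; split; lra).
    lra.
Qed.

Let kap := 1 + f / L ^ 2.
Let Cb := 16 * f * rho ^ 2 * r ^ 4 * kap / L ^ 3.

Lemma kap_sq_le : kap ^ 2 <= 1000003 / 1000000.
Proof.
  bounds. pose proof small_fL2. assert (0 <= f / L ^ 2) by (apply Rdiv_le_0_compat; [| apply pow_lt]; lra).
  unfold kap. nra.
Qed.

(* [Cb] bounds the coefficients of [a1 * a2] in the two terms of [expand_eta_second]
   that contain [K / w ^ 2]. *)
Lemma Cb_sq_le : Cb ^ 2 <= 4 * be * al.
Proof.
  bounds. pose proof small_fr8HH. pose proof kap_sq_le.
  assert (0 <= f * r ^ 8 / (H * H)) by (apply Rdiv_le_0_compat; [apply Rmult_le_pos; [| apply pow_le] | apply Rmult_lt_0_compat]; lra).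
  replace (Cb ^ 2) with ((256 * (rho ^ 4 * kap ^ 2 * (f * r ^ 8 / (H * H)))) * (H * H * f / L ^ 6))
    by (unfold Cb, H; field; lra).
  replace (4 * be * al) with (1 / 128 * (H * H * f / L ^ 6)) by (unfold be, al, H; field; lra).
  apply Rmult_le_compat_r; [apply Rdiv_le_0_compat; [apply Rmult_le_pos; [nra |] | apply pow_lt]; lra |].
  assert (rho ^ 4 * kap ^ 2 <= 107 / 100 * (1000003 / 1000000))
    by (apply Rmult_le_compat_pos; split; [apply pow_le | | apply pow2_ge_0 |]; lra).
  assert (rho ^ 4 * kap ^ 2 * (f * r ^ 8 / (H * H)) <= 107 / 100 * (1000003 / 1000000) * (1 / 1000000))
    by (apply Rmult_le_compat_pos; split; [apply Rmult_le_pos; [apply pow_le | apply pow2_ge_0] | | |]; lra).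
  lra.
Qed.

Lemma lb_Cb_cross (z : R) : Rabs z <= r ^ 4 ->
  - (be * a1 ^ 2 + al * a2 ^ 2) <= (16 * f * rho ^ 2 * kap / L ^ 3 * z) * a1 * a2.
Proof.
  bounds. intros hz. pose proof al_pos. pose proof be_pos. pose proof small_fL2.
  assert (0 <= f / L ^ 2) by positivity.
  apply (young_lb2 _ Cb); [| exact be_pos | exact al_pos | exact Cb_sq_le].
  unfold Cb. replace (16 * f * rho ^ 2 * r ^ 4 * kap / L ^ 3) with (16 * f * rho ^ 2 * kap / L ^ 3 * r ^ 4)
    by (field; lra).
  apply Rabs_scal_le; [unfold kap; positivity | exact hz].
Qed.

Lemma lb_la2K :
  - (be * a1 ^ 2 + al * a2 ^ 2) - (al * a2 ^ 2 + 3 * Rabs f1 ^ 2 * r ^ 4 / L)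
    <= -16 * l * a2 * (a1 - c1) * K / w ^ 2.
Proof.
  bounds. pose proof small_r4LH. pose proof small_fL2. pose proof al_pos. pose proof be_pos.
  assert (0 <= f / L ^ 2) by (apply Rdiv_le_0_compat; [| apply pow_lt]; lra).
  replace (-16 * l * a2 * (a1 - c1) * K / w ^ 2)
    with ((16 * f * rho ^ 2 * kap / L ^ 3 * (- K)) * a1 * a2 + (16 * f * rho ^ 2 / L ^ 4 * (K * f1)) * a2)
    by (rewrite (solve_det_deriv _ _ _ hF1), l_eq; unfold kap, rho; field; lra).
  apply Rplus_le_compat.
  - apply lb_Cb_cross. rewrite Rabs_Ropp. exact abs_K_le.
  - apply (young_lb_le _ (16 * f * rho ^ 2 / L ^ 4 * (r ^ 4 * Rabs f1))); [| exact al_pos |].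
    + apply Rabs_scal_le; [apply Rdiv_le_0_compat; [nra | apply pow_lt; lra] | apply Rabs_mult_le; lra].
    + replace ((16 * f * rho ^ 2 / L ^ 4 * (r ^ 4 * Rabs f1)) ^ 2 / (4 * al))
        with (2048 * (rho ^ 4 * (f / L ^ 2) ^ 2 * (r ^ 4 / (L * H))) * (Rabs f1 ^ 2 * r ^ 4 / L))
        by (unfold al, H; field; lra).
      replace (3 * Rabs f1 ^ 2 * r ^ 4 / L) with (3 * (Rabs f1 ^ 2 * r ^ 4 / L)) by (field; lra).
      apply Rmult_le_compat_r; [apply Rdiv_le_0_compat; [apply Rmult_le_pos; [apply pow2_ge_0 |] |]; lra |].
      assert (0 <= r ^ 4 / (L * H)) by (apply Rdiv_le_0_compat; [| apply Rmult_lt_0_compat]; lra).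
      assert ((f / L ^ 2) ^ 2 <= 1) by nra.
      assert (rho ^ 4 * (f / L ^ 2) ^ 2 <= 107 / 100 * 1)
        by (apply Rmult_le_compat_pos; split; [apply pow_le | | apply pow2_ge_0 |]; lra).
      assert (rho ^ 4 * (f / L ^ 2) ^ 2 * (r ^ 4 / (L * H)) <= 107 / 100 * 1 * (1 / 1000000))
        by (apply Rmult_le_compat_pos; split; [apply Rmult_le_pos; [apply pow_le | apply pow2_ge_0] | | |]; lra).
      lra.
Qed.

Lemma lb_Lc1XD : - (24 * Rabs f1 * r ^ 3 / L) - (be * a1 ^ 2 + 1152 * Zf) <= 16 * L * c1 * X * D / w.
Proof.
  bounds. pose proof Zf_nonneg. pose proof be_pos.
  replace (16 * L * c1 * X * D / w) with ((16 * rho / L) * (X * D * f1) + (16 * f * rho / L ^ 2 * (- (X * D))) * a1)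
    by (rewrite (solve_det_deriv _ _ _ hF1), l_eq; unfold rho; field; lra).
  apply Rplus_le_compat.
  - apply (lb_of_Rabs_le_le _ _ (r ^ 3 * Rabs f1)); [apply Rdiv_le_0_compat; lra | apply Rabs_mult_le; [exact abs_XD_le | lra] |].
    replace (16 * rho / L * (r ^ 3 * Rabs f1)) with (16 * rho * (Rabs f1 * r ^ 3 / L)) by (field; lra).
    replace (24 * Rabs f1 * r ^ 3 / L) with (24 * (Rabs f1 * r ^ 3 / L)) by (field; lra).
    apply Rmult_le_compat_r; [apply Rdiv_le_0_compat; [apply Rmult_le_pos; [apply Rabs_pos |] |] |]; lra.
  - apply (young_lb_le _ (16 * f * rho / L ^ 2 * r ^ 3)); [| exact be_pos |].
    + apply Rabs_scal_le; [apply Rdiv_le_0_compat; [| apply pow_lt]; nra |]. rewrite Rabs_Ropp. exact abs_XD_le.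
    + replace ((16 * f * rho / L ^ 2 * r ^ 3) ^ 2 / (4 * be)) with (1024 * rho ^ 2 * Zf) by (unfold be, Zf; field; lra).
      apply Rmult_le_compat_r; lra.
Qed.

Lemma lb_Lc1K_f1 :
  - (al * a2 ^ 2 + 3 * Rabs f1 ^ 2 * r ^ 4 / L) <= (16 * rho ^ 2 * kap / L ^ 2 * (- (K * f1))) * a2.
Proof.
  bounds. pose proof small_r4LH. pose proof small_fL2. pose proof kap_sq_le. pose proof al_pos.
  assert (0 <= f / L ^ 2) by positivity. assert (0 <= r ^ 4 / (L * H)) by positivity.
  apply (young_lb_le _ (16 * rho ^ 2 * kap / L ^ 2 * (r ^ 4 * Rabs f1))); [| exact al_pos |].
  - apply Rabs_scal_le; [unfold kap; positivity |]. rewrite Rabs_Ropp. apply Rabs_mult_le; lra.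
  - replace ((16 * rho ^ 2 * kap / L ^ 2 * (r ^ 4 * Rabs f1)) ^ 2 / (4 * al))
      with (2048 * (rho ^ 4 * kap ^ 2 * (r ^ 4 / (L * H))) * (Rabs f1 ^ 2 * r ^ 4 / L))
      by (unfold al, H; field; lra).
    replace (3 * Rabs f1 ^ 2 * r ^ 4 / L) with (3 * (Rabs f1 ^ 2 * r ^ 4 / L)) by (field; lra).
    apply Rmult_le_compat_r; [positivity |].
    assert (rho ^ 4 * kap ^ 2 <= 107 / 100 * (1000003 / 1000000))
      by (apply Rmult_le_compat_pos; split; [apply pow_le | | apply pow2_ge_0 |]; lra).
    assert (rho ^ 4 * kap ^ 2 * (r ^ 4 / (L * H)) <= 107 / 100 * (1000003 / 1000000) * (1 / 1000000))
      by (apply Rmult_le_compat_pos; split; [apply Rmult_le_pos; [apply pow_le | apply pow2_ge_0] | | |]; lra).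
    lra.
Qed.

Lemma lb_Lc1K_f2 :
  - (be / 2 * a1 ^ 2 + 4 * f * r ^ 4 * Rabs f2 ^ 2 / L ^ 3) <= (16 * rho ^ 2 * f / L ^ 4 * (- (K * f2))) * a1.
Proof.
  bounds. pose proof small_r4LH. pose proof be_pos. assert (0 <= r ^ 4 / (L * H)) by positivity.
  apply (young_lb_le _ (16 * rho ^ 2 * f / L ^ 4 * (r ^ 4 * Rabs f2))); [| lra |].
  - apply Rabs_scal_le; [positivity |]. rewrite Rabs_Ropp. apply Rabs_mult_le; lra.
  - replace ((16 * rho ^ 2 * f / L ^ 4 * (r ^ 4 * Rabs f2)) ^ 2 / (4 * (be / 2)))
      with (2048 * (rho ^ 4 * (r ^ 4 / (L * H))) * (f * r ^ 4 * Rabs f2 ^ 2 / L ^ 3))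
      by (unfold be, H; field; lra).
    replace (4 * f * r ^ 4 * Rabs f2 ^ 2 / L ^ 3) with (4 * (f * r ^ 4 * Rabs f2 ^ 2 / L ^ 3)) by (field; lra).
    apply Rmult_le_compat_r; [positivity |].
    assert (rho ^ 4 * (r ^ 4 / (L * H)) <= 107 / 100 * (1 / 1000000))
      by (apply Rmult_le_compat_pos; split; [apply pow_le | | |]; lra).
    lra.
Qed.

Lemma lb_Lc1K :
  - (al * a2 ^ 2 + 3 * Rabs f1 ^ 2 * r ^ 4 / L) - 32 * Rabs (f1 * f2) * r ^ 4 / L ^ 3
  - (be * a1 ^ 2 + al * a2 ^ 2) - (be / 2 * a1 ^ 2 + 4 * f * r ^ 4 * Rabs f2 ^ 2 / L ^ 3)
    <= -16 * L * c1 * (a2 - c2) * K / w ^ 2.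
Proof.
  bounds.
  replace (-16 * L * c1 * (a2 - c2) * K / w ^ 2)
    with ((16 * rho ^ 2 * kap / L ^ 2 * (- (K * f1))) * a2 + (16 * rho ^ 2 / L ^ 3) * (K * (f1 * f2))
          + (16 * f * rho ^ 2 * kap / L ^ 3 * K) * a1 * a2 + (16 * rho ^ 2 * f / L ^ 4 * (- (K * f2))) * a1)
    by (rewrite (solve_det_deriv _ _ _ hF1), (solve_det_deriv _ _ _ hF2), l_eq; unfold kap, rho; field; lra).
  repeat apply Rplus_le_compat; [exact lb_Lc1K_f1 | | exact (lb_Cb_cross K abs_K_le) | exact lb_Lc1K_f2].
  apply (lb_of_Rabs_le_le _ _ (r ^ 4 * Rabs (f1 * f2))); [positivity | apply Rabs_mult_le; lra |].
  replace (16 * rho ^ 2 / L ^ 3 * (r ^ 4 * Rabs (f1 * f2))) with (16 * rho ^ 2 * (Rabs (f1 * f2) * r ^ 4 / L ^ 3))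
    by (field; lra).
  replace (32 * Rabs (f1 * f2) * r ^ 4 / L ^ 3) with (32 * (Rabs (f1 * f2) * r ^ 4 / L ^ 3)) by (field; lra).
  apply Rmult_le_compat_r; [positivity | lra].
Qed.

Lemma lb_Xlq1 : - (al * a2 ^ 2 + 1152 * Zf) <= 16 * X * l * q1.
Proof.
  bounds. pose proof small_fL2. pose proof Zf_nonneg.
  replace (16 * X * l * q1) with (32 * X ^ 2 * l + (32 * f * rho / L ^ 2 * (X ^ 2 * Y)) * a2)
    by (unfold q1; rewrite l_eq; unfold rho; field; lra).
  assert (0 <= 32 * X ^ 2 * l) by (pose proof (pow2_ge_0 X); nra).
  enough (- (al * a2 ^ 2 + 1152 * Zf) <= (32 * f * rho / L ^ 2 * (X ^ 2 * Y)) * a2) by lra.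
  apply (young_lb_le _ (32 * f * rho / L ^ 2 * r ^ 3)); [| exact al_pos |].
  - apply Rabs_scal_le; [apply Rdiv_le_0_compat; [| apply pow_lt]; nra | exact abs_X2Y_le].
  - replace ((32 * f * rho / L ^ 2 * r ^ 3) ^ 2 / (4 * al)) with (8192 * (rho ^ 2 * (f / L ^ 2)) * Zf)
      by (unfold al, Zf; field; lra).
    apply Rmult_le_compat_r; [exact Zf_nonneg |].
    assert (0 <= f / L ^ 2) by (apply Rdiv_le_0_compat; [| apply pow_lt]; lra).
    assert (rho ^ 2 * (f / L ^ 2) <= 103 / 100 * (1 / 1000000)) by (apply Rmult_le_compat_pos; split; lra).
    lra.
Qed.

Lemma lb_YLq2 : - (48 * Rabs f1 * r ^ 3 / L) - (be * a1 ^ 2 + 4608 * Zf) <= 16 * Y * L * q2.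
Proof.
  bounds. pose proof Zf_nonneg. pose proof be_pos.
  replace (16 * Y * L * q2) with ((32 * rho / L) * (X * Y ^ 2 * f1) + (32 * f * rho / L ^ 2 * (- (X * Y ^ 2))) * a1)
    by (unfold q2; rewrite (solve_det_deriv _ _ _ hF1), l_eq; unfold rho; field; lra).
  apply Rplus_le_compat.
  - apply (lb_of_Rabs_le_le _ _ (r ^ 3 * Rabs f1)); [apply Rdiv_le_0_compat; lra | apply Rabs_mult_le; [exact abs_XY2_le | lra] |].
    replace (32 * rho / L * (r ^ 3 * Rabs f1)) with (32 * rho * (Rabs f1 * r ^ 3 / L)) by (field; lra).
    replace (48 * Rabs f1 * r ^ 3 / L) with (48 * (Rabs f1 * r ^ 3 / L)) by (field; lra).
    apply Rmult_le_compat_r; [apply Rdiv_le_0_compat; [apply Rmult_le_pos; [apply Rabs_pos |] |] |]; lra.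
  - apply (young_lb_le _ (32 * f * rho / L ^ 2 * r ^ 3)); [| exact be_pos |].
    + apply Rabs_scal_le; [apply Rdiv_le_0_compat; [| apply pow_lt]; nra |]. rewrite Rabs_Ropp. exact abs_XY2_le.
    + replace ((32 * f * rho / L ^ 2 * r ^ 3) ^ 2 / (4 * be)) with (4096 * rho ^ 2 * Zf) by (unfold be, Zf; field; lra).
      apply Rmult_le_compat_r; lra.
Qed.

Lemma lb_lq1sq : - (2304 * Zf + al * a2 ^ 2) <= -8 * l * q1 ^ 2.
Proof.
  bounds. pose proof small_fr4HL. pose proof X2Y2_le. pose proof (pow2_ge_0 X). pose proof (pow2_ge_0 a2).
  assert (hq : q1 ^ 2 <= 8 * X ^ 2 + 8 * (X ^ 2 * Y ^ 2) * (rho ^ 2 * a2 ^ 2 / L ^ 2)).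
  { eapply Rle_trans; [apply sq_add_le |]. right. unfold rho. field. lra. }
  assert (h1 : 8 * l * (8 * X ^ 2) <= 2304 * Zf).
  { replace (8 * l * (8 * X ^ 2)) with (64 * (X ^ 2 * (f / L))) by (rewrite l_eq; field; lra).
    replace Zf with (r ^ 4 / eta * (r ^ 2 * (f / L))) by (unfold Zf; field; lra).
    assert (1 <= r ^ 4 / eta) by (apply (Rmult_le_reg_r eta); [lra |]; field_simplify; lra).
    assert (0 <= f / L) by (apply Rdiv_le_0_compat; lra).
    assert (X ^ 2 * (f / L) <= r ^ 2 * (f / L)) by (apply Rmult_le_compat_r; lra).
    assert (r ^ 2 * (f / L) <= r ^ 4 / eta * (r ^ 2 * (f / L)))
      by (apply (Rle_trans _ (1 * (r ^ 2 * (f / L)))); [lra | apply Rmult_le_compat_r; nra]).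
    assert (0 <= r ^ 2 * (f / L)) by (apply Rmult_le_pos; lra). lra. }
  assert (h2 : 8 * l * (8 * (X ^ 2 * Y ^ 2) * (rho ^ 2 * a2 ^ 2 / L ^ 2)) <= al * a2 ^ 2).
  { replace (8 * l * (8 * (X ^ 2 * Y ^ 2) * (rho ^ 2 * a2 ^ 2 / L ^ 2)))
      with ((X ^ 2 * Y ^ 2) * (64 * rho ^ 2 * f * a2 ^ 2 / L ^ 3)) by (rewrite l_eq; field; lra).
    assert (0 <= 64 * rho ^ 2 * f * a2 ^ 2 / L ^ 3) by positivity.
    apply (Rle_trans _ (r ^ 4 * (64 * rho ^ 2 * f * a2 ^ 2 / L ^ 3))); [apply Rmult_le_compat_r; lra |].
    replace (r ^ 4 * (64 * rho ^ 2 * f * a2 ^ 2 / L ^ 3)) with ((2048 * (rho ^ 2 * (f * r ^ 4 / (H * L)))) * (al * a2 ^ 2))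
      by (unfold al, H; field; lra).
    assert (0 <= f * r ^ 4 / (H * L)) by (apply Rdiv_le_0_compat; [| apply Rmult_lt_0_compat]; nra).
    assert (rho ^ 2 * (f * r ^ 4 / (H * L)) <= 103 / 100 * (1 / 1000000)) by (apply Rmult_le_compat_pos; split; lra).
    assert (0 <= al * a2 ^ 2) by (pose proof al_pos; nra).
    nra. }
  nra.
Qed.

Lemma c1_sq_le : c1 ^ 2 <= 2 * f1 ^ 2 / L ^ 2 + 2 * (f ^ 2 * a1 ^ 2) / L ^ 4.
Proof.
  bounds. replace c1 with (f1 / L + (- (a1 * f / L ^ 2))) by (rewrite (solve_det_deriv _ _ _ hF1), l_eq; field; lra).
  eapply Rle_trans; [apply sq_add_le |]. right. field. lra.
Qed.

Lemma lb_Lq2sq : - (128 * f1 ^ 2 * r ^ 4 / L ^ 3 + be / 2 * a1 ^ 2) <= -8 * L * q2 ^ 2.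
Proof.
  bounds. pose proof small_fr4HL. pose proof X2Y2_le. pose proof c1_sq_le. pose proof (pow2_ge_0 c1).
  replace (-8 * L * q2 ^ 2) with (- ((X ^ 2 * Y ^ 2) * (32 * rho ^ 2 * c1 ^ 2 / L))) by (unfold q2, rho; field; lra).
  apply Ropp_le_contravar.
  assert (0 <= 32 * rho ^ 2 * c1 ^ 2 / L) by (apply Rdiv_le_0_compat; [nra | lra]).
  apply (Rle_trans _ (r ^ 4 * (32 * rho ^ 2 * c1 ^ 2 / L))); [apply Rmult_le_compat_r; [lra | nra] |].
  assert (h : r ^ 4 * (32 * rho ^ 2 * c1 ^ 2 / L)
              <= (64 * rho ^ 2) * (f1 ^ 2 * r ^ 4 / L ^ 3) + (2048 * (rho ^ 2 * (f * r ^ 4 / (H * L)))) * (be / 2 * a1 ^ 2)).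
  { replace (r ^ 4 * (32 * rho ^ 2 * c1 ^ 2 / L)) with ((32 * rho ^ 2 * r ^ 4 / L) * c1 ^ 2) by (field; lra).
    replace ((64 * rho ^ 2) * (f1 ^ 2 * r ^ 4 / L ^ 3) + (2048 * (rho ^ 2 * (f * r ^ 4 / (H * L)))) * (be / 2 * a1 ^ 2))
      with ((32 * rho ^ 2 * r ^ 4 / L) * (2 * f1 ^ 2 / L ^ 2 + 2 * (f ^ 2 * a1 ^ 2) / L ^ 4)) by (unfold be, H; field; lra).
    apply Rmult_le_compat_l; [apply Rdiv_le_0_compat; nra | lra]. }
  assert (0 <= f1 ^ 2 * r ^ 4 / L ^ 3) by (apply Rdiv_le_0_compat; [apply Rmult_le_pos; [apply pow2_ge_0 | lra] | apply pow_lt; lra]).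
  assert (0 <= f * r ^ 4 / (H * L)) by (apply Rdiv_le_0_compat; [| apply Rmult_lt_0_compat]; nra).
  assert (rho ^ 2 * (f * r ^ 4 / (H * L)) <= 103 / 100 * (1 / 1000000)) by (apply Rmult_le_compat_pos; split; lra).
  assert (0 <= be / 2 * a1 ^ 2) by (pose proof be_pos; pose proof (pow2_ge_0 a1); nra).
  replace (128 * f1 ^ 2 * r ^ 4 / L ^ 3) with (128 * (f1 ^ 2 * r ^ 4 / L ^ 3)) by (field; lra).
  nra.
Qed.

Lemma K_sq_le : K ^ 2 <= r ^ 8.
Proof.
  rewrite <- pow2_abs. replace (r ^ 8) with ((r ^ 4) ^ 2) by ring.
  apply pow_incr. split; [apply Rabs_pos | exact abs_K_le].
Qed.

Lemma lb_eta2_cross :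
  - (6 * Rabs f1 ^ 2 * r ^ 4 / L + be / 2 * a1 ^ 2) <= - (4 * L * (2 * K * c1 / w) ^ 2 / eta).
Proof.
  bounds. pose proof small_r4LH. pose proof small_fr8HH. pose proof K_sq_le. pose proof c1_sq_le.
  apply Ropp_le_contravar.
  replace (4 * L * (2 * K * c1 / w) ^ 2 / eta) with (K ^ 2 * (16 * rho ^ 2 * c1 ^ 2 / (L * eta)))
    by (unfold rho; field; lra).
  assert (0 <= 16 * rho ^ 2 * c1 ^ 2 / (L * eta)) by positivity.
  apply (Rle_trans _ (r ^ 8 * (16 * rho ^ 2 * c1 ^ 2 / (L * eta)))); [apply Rmult_le_compat_r; lra |].
  assert (h : r ^ 8 * (16 * rho ^ 2 * c1 ^ 2 / (L * eta))
              <= (32 * (rho ^ 2 * (r ^ 4 / (L * H)))) * (Rabs f1 ^ 2 * r ^ 4 / L)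
                 + (1024 * (rho ^ 2 * (f * r ^ 8 / (H * H)))) * (be / 2 * a1 ^ 2)).
  { replace (r ^ 8 * (16 * rho ^ 2 * c1 ^ 2 / (L * eta))) with ((16 * rho ^ 2 * r ^ 8 / (L * eta)) * c1 ^ 2)
      by (field; lra).
    replace ((32 * (rho ^ 2 * (r ^ 4 / (L * H)))) * (Rabs f1 ^ 2 * r ^ 4 / L)
             + (1024 * (rho ^ 2 * (f * r ^ 8 / (H * H)))) * (be / 2 * a1 ^ 2))
      with ((16 * rho ^ 2 * r ^ 8 / (L * eta)) * (2 * f1 ^ 2 / L ^ 2 + 2 * (f ^ 2 * a1 ^ 2) / L ^ 4))
      by (rewrite pow2_abs; unfold be, H; field; lra).
    apply Rmult_le_compat_l; [positivity | lra]. }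
  assert (0 <= r ^ 4 / (L * H)) by positivity.
  assert (0 <= f * r ^ 8 / (H * H)) by positivity.
  assert (rho ^ 2 * (r ^ 4 / (L * H)) <= 103 / 100 * (1 / 1000000)) by (apply Rmult_le_compat_pos; split; lra).
  assert (rho ^ 2 * (f * r ^ 8 / (H * H)) <= 103 / 100 * (1 / 1000000)) by (apply Rmult_le_compat_pos; split; lra).
  assert (0 <= Rabs f1 ^ 2 * r ^ 4 / L) by positivity.
  assert (0 <= be / 2 * a1 ^ 2) by (pose proof be_pos; positivity).
  replace (6 * Rabs f1 ^ 2 * r ^ 4 / L) with (6 * (Rabs f1 ^ 2 * r ^ 4 / L)) by (field; lra).
  nra.
Qed.

Lemma lb_gradient :
  - (6 * Rabs f1 ^ 2 * r ^ 4 / L + be / 2 * a1 ^ 2) <= -8 * B * L + 16 * eta * L / r ^ 2 + 4 * L * eta2 ^ 2 / eta.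
Proof.
  bounds. pose proof lb_eta2_cross.
  set (A := r ^ 2 - Y ^ 2). set (dl := 2 * K * c1 / w) in *.
  assert (hA : 0 < A) by (unfold A; lra). assert (hB : 0 < B) by (unfold B; lra).
  assert (hsq : eta2 ^ 2 >= 2 * Y ^ 2 * B ^ 2 - dl ^ 2).
  { assert (e : eta2 = -2 * Y * B + dl) by (rewrite heta2; unfold dl, B; field; lra).
    assert (E : (-2 * Y * B + dl) ^ 2 - (2 * Y ^ 2 * B ^ 2 - dl ^ 2) = 2 * (Y * B - dl) ^ 2) by ring.
    rewrite e. pose proof (pow2_ge_0 (Y * B - dl)). lra. }
  (* the part [2 Y^2 B^2] of [eta2 ^ 2] absorbs the term [-8 B L] *)
  assert (hP : 0 <= -8 * B * L + 16 * eta * L / r ^ 2 + 8 * L * Y ^ 2 * B / A).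
  { replace (-8 * B * L + 16 * eta * L / r ^ 2 + 8 * L * Y ^ 2 * B / A)
      with (8 * B * L * (((r ^ 2 - A) ^ 2 + A ^ 2) / (A * r ^ 2))) by (rewrite heta; unfold A, B; field; lra).
    positivity. }
  assert (hS : 4 * L * eta2 ^ 2 / eta >= 8 * L * Y ^ 2 * B / A - 4 * L * dl ^ 2 / eta).
  { replace (4 * L * eta2 ^ 2 / eta) with ((4 * L / eta) * eta2 ^ 2) by (field; lra).
    replace (8 * L * Y ^ 2 * B / A - 4 * L * dl ^ 2 / eta) with ((4 * L / eta) * (2 * Y ^ 2 * B ^ 2 - dl ^ 2))
      by (rewrite heta; fold A B; field; lra).
    apply Rle_ge, Rmult_le_compat_l; [positivity | lra]. }
  lra.
Qed.

Lemma third_estimate_scaled :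
  0 <= 4 * (l * eta_xx_diag r X Y w (a1 - c1) a2 bxx + L * eta_yy_diag r X Y w (a2 - c2) c1 byy)
       + 16 * eta * L / r ^ 2 + 4 * L * eta2 ^ 2 / eta + eta * f * a1 ^ 2 / (2 * L ^ 3) + eta * a2 ^ 2 / (4 * L)
       + 8 * f * r ^ 2 / L + 16 * Rabs f12 * r ^ 4 / L + 128 * f1 ^ 2 * r ^ 4 / L ^ 3
       + 32 * Rabs (f1 * f2) * r ^ 4 / L ^ 3 + 96 * Rabs f1 * r ^ 3 / L + 24 * Rabs f1 ^ 2 * r ^ 4 / L
       + 48 * f * r ^ 2 / L + 32 * f * r ^ 4 * Rabs f2 ^ 2 / L ^ 3 + 36864 * Zf
       + 512 * Rabs f2 ^ 2 * r ^ 8 / (eta * L * f).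
Proof.
  bounds. rewrite expand_eta_second.
  pose proof lb_gradient. pose proof lb_Bl. pose proof lb_lD. pose proof lb_Kf12. pose proof lb_Kcross.
  pose proof lb_la2YD. pose proof lb_la2K. pose proof lb_Lc1XD. pose proof lb_Lc1K. pose proof lb_Xlq1.
  pose proof lb_YLq2. pose proof lb_lq1sq. pose proof lb_Lq2sq. pose proof Zf_nonneg.
  assert (0 <= 8 * l * a2 ^ 2 * D ^ 2 / w ^ 2) by positivity.
  assert (0 <= 8 * L * c1 ^ 2 * D ^ 2 / w ^ 2) by positivity.
  assert (al * a2 ^ 2 = 1 / 8 * (eta * a2 ^ 2 / (4 * L))) by (unfold al; field; lra).
  assert (be * a1 ^ 2 = 1 / 8 * (eta * f * a1 ^ 2 / (2 * L ^ 3))) by (unfold be; field; lra).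
  assert (be / 2 * a1 ^ 2 = 1 / 16 * (eta * f * a1 ^ 2 / (2 * L ^ 3))) by (unfold be; field; lra).
  rewrite <- (pow2_abs f1) in *.
  assert (0 <= eta * f * a1 ^ 2 / (2 * L ^ 3)) by positivity.
  assert (0 <= eta * a2 ^ 2 / (4 * L)) by positivity.
  assert (0 <= Rabs f1 ^ 2 * r ^ 4 / L) by positivity.
  assert (0 <= Rabs f1 ^ 2 * r ^ 4 / L ^ 3) by positivity.
  assert (0 <= Rabs f1 * r ^ 3 / L) by positivity.
  assert (0 <= f * r ^ 4 * Rabs f2 ^ 2 / L ^ 3) by positivity.
  assert (0 <= Rabs f2 ^ 2 * r ^ 8 / (eta * L * f)) by positivity.
  assert (0 <= f * r ^ 2 / L) by positivity.
  assert (0 <= Rabs f12 * r ^ 4 / L) by positivity.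
  assert (0 <= Rabs (f1 * f2) * r ^ 4 / L ^ 3) by positivity.
  lra.
Qed.

Lemma third_estimate :
  4 * (f / L * (eta_xx_diag r X Y w (a1 - c1) a2 bxx / eta) + L * (eta_yy_diag r X Y w (a2 - c2) c1 byy / eta))
    >= - (1 / 2) * (32 / m / r ^ 2) * f * L
       - 4 * L * (eta2 / eta) ^ 2
       - f / (2 * L) * (a1 / L) ^ 2
       - L / 4 * (a2 / L) ^ 2
       - 2 * 4 * f * r ^ 2 / (eta * L)
       - 4 * 4 * Rabs f12 * r ^ 4 / (eta * L)
       - 32 * 4 * f1 ^ 2 * r ^ 4 / (eta * L ^ 3)
       - 8 * 4 * Rabs (f1 * f2) * r ^ 4 / (eta * L ^ 3)
       - 24 * 4 * Rabs f1 * r ^ 3 / (eta * L)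
       - 6 * 4 * Rabs f1 ^ 2 * r ^ 4 / (eta * L)
       - 12 * 4 * f * r ^ 2 / (eta * L)
       - 8 * 4 * f * r ^ 4 * Rabs f2 ^ 2 / (eta * L ^ 3)
       - (48 * 4) ^ 2 * f * r ^ 6 / (eta ^ 2 * L)
       - 32 * 4 ^ 2 * Rabs f2 ^ 2 * r ^ 8 / (eta ^ 2 * L * f).
Proof.
  bounds. pose proof third_estimate_scaled as hS.
  set (e11 := eta_xx_diag r X Y w (a1 - c1) a2 bxx) in *. set (e22 := eta_yy_diag r X Y w (a2 - c2) c1 byy) in *.
  (* [m <= f] lets the gradient weight [g'/g = 32 / (m r ^ 2)] pay for [16 eta L / r ^ 2] *)
  assert (hT0 : 16 * eta * L / r ^ 2 <= eta * (1 / 2 * (32 / m / r ^ 2) * f * L)).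
  { replace (eta * (1 / 2 * (32 / m / r ^ 2) * f * L)) with (f / m * (16 * eta * L / r ^ 2)) by (field; lra).
    assert (1 <= f / m) by (apply (Rmult_le_reg_r m); [lra |]; field_simplify; lra).
    assert (0 <= 16 * eta * L / r ^ 2) by positivity. nra. }
  match type of hS with 0 <= ?S => match goal with |- ?lhs >= ?rhs =>
    assert (E : lhs - rhs = (S - 16 * eta * L / r ^ 2 + eta * (1 / 2 * (32 / m / r ^ 2) * f * L)) / eta)
      by (rewrite l_eq; unfold Zf; field; repeat split; lra);
    assert (0 <= (S - 16 * eta * L / r ^ 2 + eta * (1 / 2 * (32 / m / r ^ 2) * f * L)) / eta)
      by (apply Rdiv_le_0_compat; lra)
  end end.
  lra.
Qed.

End ThirdEstimate.

End Estimates.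

Lemma Rabs_le_norm2 (a b : R) : Rabs a <= sqrt (a ^ 2 + b ^ 2) /\ Rabs b <= sqrt (a ^ 2 + b ^ 2).
Proof.
  split; rewrite <- sqrt_Rsqr_abs; apply sqrt_le_1_alt; rewrite Rsqr_pow2;
    pose proof (pow2_ge_0 a); pose proof (pow2_ge_0 b); lra.
Qed.

Lemma sup_bound (S : R -> Prop) (G a b : R) : is_lub S G -> S (sqrt (a ^ 2 + b ^ 2)) -> Rabs a <= G /\ Rabs b <= G.
Proof. intros [hub _] hS. pose proof (hub _ hS). pose proof (Rabs_le_norm2 a b). lra. Qed.

Theorem lemma3p1
  (Rad m M : R) (U F : nat -> nat -> R -> R -> R) (t1 t2 : R -> R -> R)
  (Gf Gu : R) (x0 y0 : R) :
  let r := Rad / sqrt 2 in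
  let beta := 4 in
  let c0 := 32 / m in
  0 < Rad ->
  (* u in C^4(B_R(0)), convex, det D^2 u = f *)
  Ck_family (in_ball Rad) 4 U ->
  convex_on_ball Rad (U 0%nat 0%nat) ->
  (forall x y, in_ball Rad x y ->
     U 2%nat 0%nat x y * U 0%nat 2%nat x y - U 1%nat 1%nat x y ^ 2 = F 0%nat 0%nat x y) ->
  (* f in C^2, 0 < m <= f <= M *)
  Ck_family (in_ball Rad) 2 F ->
  0 < m ->
  (forall x y, in_ball Rad x y -> m <= F 0%nat 0%nat x y <= M) ->
  (* Gf = sup |grad f|, Gu = sup |Du| over B_R(0) *)
  is_lub (fun z => exists x y, in_ball Rad x y /\
            z = sqrt (F 1%nat 0%nat x y ^ 2 + F 0%nat 1%nat x y ^ 2)) Gf ->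
  is_lub (fun z => exists x y, in_ball Rad x y /\
            z = sqrt (U 1%nat 0%nat x y ^ 2 + U 0%nat 1%nat x y ^ 2)) Gu ->
  (* tau: continuous unit eigenvector field for the largest eigenvalue *)
  cont2_on (in_ball Rad) t1 -> cont2_on (in_ball Rad) t2 ->
  (forall x y, in_ball Rad x y ->
     top_unit_eigvec (U 2%nat 0%nat x y) (U 1%nat 1%nat x y) (U 0%nat 2%nat x y)
       (t1 x y) (t2 x y)) ->
  (* x0 maximizes phi over Sigma *)
  in_Sigma Rad r t1 t2 x0 y0 ->
  (forall x y, in_Sigma Rad r t1 t2 x y ->
     phi_fun r c0 U t1 t2 x y <= phi_fun r c0 U t1 t2 x0 y0) ->
  (* coordinates: D^2u(x0) diagonal, lambda1 = u11 >= lambda2 = u22, tau(x0) = (1,0) *)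
  U 1%nat 1%nat x0 y0 = 0 ->
  U 2%nat 0%nat x0 y0 >= U 0%nat 2%nat x0 y0 ->
  t1 x0 y0 = 1 -> t2 x0 y0 = 0 ->
  (* main assumption *)
  eta_fun r t1 t2 x0 y0 * U 2%nat 0%nat x0 y0 >=
    10 ^ 3 * (1 + M + r * Gf + M / m * (Gu / r)) * r ^ 4 ->
  (* conclusion: eta has first partials E1, E2 near x0 and second partials e11, e22 at x0,
     and the three estimates hold at x0 *)
  exists (E1 E2 : R -> R -> R) (del e11 e22 : R),
    del > 0 /\
    (forall x y, (x - x0) ^ 2 + (y - y0) ^ 2 < del ^ 2 ->
       derivable_pt_lim (fun s => eta_fun r t1 t2 s y) x (E1 x y) /\
       derivable_pt_lim (fun t => eta_fun r t1 t2 x t) y (E2 x y)) /\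
    derivable_pt_lim (fun s => E1 s y0) x0 e11 /\
    derivable_pt_lim (fun t => E2 x0 t) y0 e22 /\
    let eta := eta_fun r t1 t2 x0 y0 in
    let eta1 := E1 x0 y0 in
    let eta2 := E2 x0 y0 in
    let l1 := U 2%nat 0%nat x0 y0 in
    let f := F 0%nat 0%nat x0 y0 in
    let f1 := F 1%nat 0%nat x0 y0 in
    let f2 := F 0%nat 1%nat x0 y0 in
    let f12 := F 1%nat 1%nat x0 y0 in
    let u2 := U 0%nat 1%nat x0 y0 in
    let u111 := U 3%nat 0%nat x0 y0 in
    let u112 := U 2%nat 1%nat x0 y0 in
    let gg := c0 / r ^ 2 in
    beta * (f / l1) * (eta1 ^ 2 / eta ^ 2)
      <= 8 * beta * f * r ^ 6 / (eta ^ 2 * l1) + l1 / 4 * (u112 / l1) ^ 2 /\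
    beta * f * gg * (eta2 / eta) * u2
      >= - (4 * beta * f * gg * (r ^ 4 / eta) * (Rabs u2 / r)) /\
    beta * (f / l1 * (e11 / eta) + l1 * (e22 / eta))
      >= - (1 / 2) * gg * f * l1
         - beta * l1 * (eta2 / eta) ^ 2
         - f / (2 * l1) * (u111 / l1) ^ 2
         - l1 / 4 * (u112 / l1) ^ 2
         - 2 * beta * f * r ^ 2 / (eta * l1)
         - 4 * beta * Rabs f12 * r ^ 4 / (eta * l1)
         - 32 * beta * f1 ^ 2 * r ^ 4 / (eta * l1 ^ 3)
         - 8 * beta * Rabs (f1 * f2) * r ^ 4 / (eta * l1 ^ 3)
         - 24 * beta * Rabs f1 * r ^ 3 / (eta * l1)
         - 6 * beta * Rabs f1 ^ 2 * r ^ 4 / (eta * l1)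
         - 12 * beta * f * r ^ 2 / (eta * l1)
         - 8 * beta * f * r ^ 4 * Rabs f2 ^ 2 / (eta * l1 ^ 3)
         - (48 * beta) ^ 2 * f * r ^ 6 / (eta ^ 2 * l1)
         - 32 * beta ^ 2 * Rabs f2 ^ 2 * r ^ 8 / (eta ^ 2 * l1 * f).

Proof.
  intros r beta c0 hRad hU _ hdet hF hm hfb hGf hGu _ _ hev hS0 hmax hb0 _ ht1 ht2 hmain.
  assert (hr : 0 < r) by (apply Rdiv_lt_0_compat; [lra | apply sqrt_lt_R0; lra]).
  destruct (in_Sigma_diag Rad r x0 y0 t1 t2 hS0 ht1 ht2) as [hball0 [hA [hB heta]]].
  destruct (hfb x0 y0 hball0) as [hfm hfM].
  assert (hX : x0 ^ 2 < r ^ 2) by lra. assert (hY : y0 ^ 2 < r ^ 2) by lra.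
  assert (hf : 0 < F 0%nat 0%nat x0 y0) by lra.
  assert (hfl : F 0%nat 0%nat x0 y0 = U 2%nat 0%nat x0 y0 * U 0%nat 2%nat x0 y0)
    by (rewrite <- (hdet x0 y0 hball0), hb0; ring).
  destruct (sup_bound _ _ _ _ hGf ltac:(exists x0, y0; split; [exact hball0 | reflexivity])) as [hf1 hf2].
  destruct (sup_bound _ _ _ _ hGu ltac:(exists x0, y0; split; [exact hball0 | reflexivity])) as [hu1 hu2].
  pose proof (Rabs_pos (F 1%nat 0%nat x0 y0)). pose proof (Rabs_pos (U 1%nat 0%nat x0 y0)).
  destruct (main_assumption_bounds r m M Gf Gu _ _ hr hm hf hfM ltac:(lra) ltac:(lra) hmain)
    as [hH [hHGf hHGu]].
  pose proof (l_lt_L r x0 y0 _ _ _ _ hr hX hY heta hf hfl hH) as hgap.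
  destruct (Hessian_gap_near Rad x0 y0 U hRad hball0 hU hgap) as [del [hdel hnear]].
  pose proof (critical_x Rad r c0 del x0 y0 U t1 t2 hU hev hmax hdel hnear hb0 hA hB) as hC1.
  pose proof (critical_y Rad r c0 del x0 y0 U t1 t2 hU hev hmax hdel hnear hb0 hA hB) as hC2.
  rewrite <- heta in hC1, hC2.
  exists (eta_x r U), (eta_y r U), (del / 2), (eta_x_x r U x0 y0), (eta_y_y r U x0 y0).
  split; [lra |]. split; [| split; [| split]].
  - intros x y hxy. split; apply is_derive_Reals;
      [exact (is_derive_eta_fun_x Rad r del x0 y0 U t1 t2 hU hev hdel hnear x y hxy)
      | exact (is_derive_eta_fun_y Rad r del x0 y0 U t1 t2 hU hev hdel hnear x y hxy)].
  - apply is_derive_Reals. exact (is_derive_eta_x_x Rad r del x0 y0 U hU hdel hnear hb0).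
  - apply is_derive_Reals. exact (is_derive_eta_y_y Rad r del x0 y0 U hU hdel hnear hb0).
  - pose proof (eta_x_center Rad r del x0 y0 U hdel hnear hb0) as heta1.
    pose proof (eta_y_center Rad r del x0 y0 U hdel hnear hb0) as heta2.
    pose proof (det_x_center Rad del x0 y0 U F hU hF hdet hdel hnear hb0) as hF1.
    pose proof (det_y_center Rad del x0 y0 U F hU hF hdet hdel hnear hb0) as hF2.
    pose proof (det_xy_center Rad del x0 y0 U F hU hF hdet hdel hnear hb0) as hF12.
    cbv zeta. split; [| split].
    + rewrite heta1. exact (first_estimate r x0 y0 _ _ _ _ hr hX hY heta hf hfl hH _).
    + exact (second_estimate r x0 y0 _ _ _ _ hr hX hY heta hf hfl hH
        m M Gf Gu _ _ _ _ _ _ _ _ hm hfM hHGf hHGu hf1 hu1 hu2 heta1 heta2 hF1 hC1 hC2).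
    + exact (third_estimate r x0 y0 _ _ _ _ hr hX hY heta hf hfl hH
        m _ _ _ _ _ _ _ _ _ _ hm hfm hF1 hF2 hF12 heta2).
Qed.
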